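(* Let $G=G_0*_HG_1$ be a nondegenerate free product with amalgamation with Bass-Serre tree $T$ and boundary $\partial T$. The following are equivalent: (i) $\operatorname{int}G=\{e\}$; (ii) the action of $G$ on $T$ (i.e. on its edge set $G/H$) is strongly faithful; (iii) the action of $G$ on $\partial T$ is strongly faithful; (iv) the action of $G$ on $\partial T$ is topologically free.
   Context: The amalgam is nondegenerate if $([G_0:H]-1)([G_1:H]-1)\ge2$. For $j=0,1$ and $k\ge1$ let $T_{j,k}=\{x_0\cdots x_{k-1}:x_i\in G_{i+j\bmod2}\setminus H\}$, $T_{j,0}=H$, $C_{j,k}=\bigcap_{g\in T_{j,k}}gHg^{-1}$, $K_j=\bigcap_{k\ge0}C_{j,k}$. $\operatorname{int}G$ denotes the normal closure of $K_0\cup K_1$ in $G$. The Bass-Serre tree $T$ has vertex set $G/G_0\sqcup G/G_1$ and edge set $G/H$, the edge $gH$ joining $gG_0$ and $gG_1$; $G$ acts by left multiplication. A ray is a sequence of vertices $(x_n)_{n\ge0}$ with $x_n,x_{n+1}$ adjacent and $x_{n+2}\ne x_n$; two rays are cofinal if they eventually agree up to a shift of index; $\partial T$ is the set of cofinality classes, with the topology generated by the sets $Z_B(e)$, for oriented edges $e$ from vertex $s$ to vertex $r$, consisting of classes of rays that pass through $s$ and then $r$ consecutively. An action of $G$ on a set $X$ is strongly faithful if for every finite $F\subseteq G\setminus\{e\}$ there is $x\in X$ with $fx\ne x$ for all $f\in F$. An action on a topological space is topologically free if for every $g\ne e$ its fixed-point set has empty interior. *)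

From Stdlib Require Import List.
Set Implicit Arguments.

Record Group := {
  gcar :> Type;
  gmul : gcar -> gcar -> gcar;
  ginv : gcar -> gcar;
  gone : gcar;
  gmulA : forall x y z, gmul x (gmul y z) = gmul (gmul x y) z;
  gmul1 : forall x, gmul gone x = x;
  gmulV : forall x, gmul (ginv x) x = gone }.

Arguments gmul {g}.
Arguments ginv {g}.
Arguments gone {g}.

Definition is_subgroup {G : Group} (S : G -> Prop) : Prop :=
  S gone /\ (forall x y, S x -> S y -> S (gmul x y)) /\ (forall x, S x -> S (ginv x)).

Definition is_normal {G : Group} (N : G -> Prop) : Prop :=
  is_subgroup N /\ (forall g x, N x -> N (gmul (gmul g x) (ginv g))).

Definition is_hom_on {G K : Group} (S : G -> Prop) (f : G -> K) : Prop :=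
  forall x y, S x -> S y -> f (gmul x y) = gmul (f x) (f y).

(* G is the free product of its subgroups G0 and G1 amalgamated over
   H := G0 ∩ G1: the inclusions form a pushout in the category of groups. *)
Definition is_amalgam {G : Group} (G0 G1 : G -> Prop) : Prop :=
  is_subgroup G0 /\ is_subgroup G1 /\
  forall (K : Group) (f0 f1 : G -> K),
    is_hom_on G0 f0 -> is_hom_on G1 f1 ->
    (forall h, G0 h -> G1 h -> f0 h = f1 h) ->
    (exists phi : G -> K, is_hom_on (fun _ => True) phi /\
        (forall x, G0 x -> phi x = f0 x) /\ (forall x, G1 x -> phi x = f1 x)) /\
    (forall phi psi : G -> K,
        is_hom_on (fun _ => True) phi -> is_hom_on (fun _ => True) psi ->
        (forall x, G0 x -> phi x = f0 x) -> (forall x, G1 x -> phi x = f1 x) ->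
        (forall x, G0 x -> psi x = f0 x) -> (forall x, G1 x -> psi x = f1 x) ->
        forall x, phi x = psi x).

Unset Implicit Arguments.
Section Amalgam.
Variables (G : Group) (G0 G1 : G -> Prop).

Definition Hsub (x : G) : Prop := G0 x /\ G1 x.
Definition Gj (j : bool) : G -> Prop := if j then G1 else G0.

(* [G_j : H] >= 2 and [G_j : H] >= 3 (indices may be infinite) *)
Definition index_ge2 (S : G -> Prop) : Prop := exists a, S a /\ ~ Hsub a.
Definition index_ge3 (S : G -> Prop) : Prop :=
  exists a b, S a /\ S b /\ ~ Hsub a /\ ~ Hsub b /\ ~ Hsub (gmul (ginv a) b).

(* ([G0:H]-1)([G1:H]-1) >= 2 *)
Definition nondegenerate : Prop :=
  index_ge2 G0 /\ index_ge2 G1 /\ (index_ge3 G0 \/ index_ge3 G1).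

Fixpoint Tword (j : bool) (k : nat) (g : G) : Prop :=
  match k with
  | 0 => g = gone
  | S k' => exists x y, Gj j x /\ ~ Hsub x /\ Tword (negb j) k' y /\ g = gmul x y
  end.

Definition Tset (j : bool) (k : nat) (g : G) : Prop :=
  match k with 0 => Hsub g | _ => Tword j k g end.

(* C_{j,k} = ∩_{g ∈ T_{j,k}} g H g^{-1} *)
Definition Cset (j : bool) (k : nat) (x : G) : Prop :=
  forall g, Tset j k g -> Hsub (gmul (gmul (ginv g) x) g).

Definition Kset (j : bool) (x : G) : Prop := forall k, Cset j k x.

(* int G = normal closure of K_0 ∪ K_1 *)
Definition intG (x : G) : Prop :=
  forall N : G -> Prop, is_normal N ->
    (forall y, Kset false y \/ Kset true y -> N y) -> N x.

Definition strongly_faithful (X : Type) (dom : X -> Prop) (eqX : X -> X -> Prop)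
  (act : G -> X -> X) : Prop :=
  forall F : list G, (forall f, In f F -> f <> gone) ->
    exists x, dom x /\ forall f, In f F -> ~ eqX (act f x) x.

(* Bass-Serre tree: vertices (j, a) represent the cosets a G_j *)
Definition vertex : Type := (bool * G)%type.
Definition veq (v w : vertex) : Prop :=
  fst v = fst w /\ Gj (fst v) (gmul (ginv (snd v)) (snd w)).
Definition vact (g : G) (v : vertex) : vertex := (fst v, gmul g (snd v)).
(* adjacency: the two cosets (one of G0, one of G1) share an element g,
   i.e. are the endpoints of the edge gH *)
Definition adj (v w : vertex) : Prop :=
  fst v <> fst w /\ exists g, veq v (fst v, g) /\ veq w (fst w, g).

Definition is_ray (x : nat -> vertex) : Prop :=
  forall n, adj (x n) (x (S n)) /\ ~ veq (x (S (S n))) (x n).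
Definition cofinal (x y : nat -> vertex) : Prop :=
  exists m k, forall n, veq (x (n + m)) (y (n + k)).
Definition ray_act (g : G) (x : nat -> vertex) : nat -> vertex :=
  fun n => vact g (x n).

(* Z_B(e) for the oriented edge e = gH from g G_j to g G_{1-j} *)
Definition Zset (j : bool) (g : G) (x : nat -> vertex) : Prop :=
  exists y, is_ray y /\ cofinal x y /\
    exists n, veq (y n) (j, g) /\ veq (y (S n)) (negb j, g).

Inductive gen_open : ((nat -> vertex) -> Prop) -> Prop :=
  | go_basic j g : gen_open (Zset j g)
  | go_top : gen_open (fun _ => True)
  | go_inter U V : gen_open U -> gen_open V -> gen_open (fun x => U x /\ V x)
  | go_union (S : ((nat -> vertex) -> Prop) -> Prop) :
      (forall U, S U -> gen_open U) -> gen_open (fun x => exists U, S U /\ U x).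

Definition topologically_free : Prop :=
  forall g : G, g <> gone ->
    ~ exists U, gen_open U /\ (exists x, is_ray x /\ U x) /\
        (forall x, is_ray x -> U x -> cofinal (ray_act g x) x).

End Amalgam.

(* Reduced words of the amalgam have products outside [H] (van der Waerden's action on normal
   words), and every element outside [H] is such a product times an element of [H] (uniqueness in
   the universal property, applied to a twisted copy of [G]).  So [G \ H] splits into the sets
   [C_0], [C_1] of elements whose reduced form begins in [G_0], resp. [G_1]; [H u C_l] is the edge
   set of a half-tree of [T], and [K_l] is exactly its pointwise stabiliser.

   If [K_0 = K_1 = 1], every [f <> 1] moves some half-tree inside any given half-tree off itself
   (by cases on the first and last letters of [f], using nondegeneracy in the mixed case), so a
   finite [F] moves a single half-tree off itself; its edges witness (ii) and its rays (iii).
   Conversely a nontrivial element of [K_j] and a conjugate of it fix the two complementary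
   half-trees at an edge, contradicting (ii), and it fixes the open set [Z_B(e)] pointwise,
   contradicting (iv).  Finally (iii) implies (iv): a nonempty open set of ends contains a
   translate of some [Z_B(e)], and two translates of [Z_B(e)] cover the boundary. *)

From Pilot Require Import Defs.
From Stdlib Require Import List Bool Arith Lia.
From Stdlib Require Import ClassicalEpsilon FunctionalExtensionality PropExtensionality ProofIrrelevance.
Import ListNotations.

Arguments gmul1 {g}.
Arguments gmulA {g}.
Arguments gmulV {g}.

Section Groups.
Context {G : Group}.
Local Notation "x * y" := (gmul x y).
Local Notation e := (@gone G).

Lemma mulgV (x : G) : x * ginv x = e.
Proof.
  rewrite <- (gmul1 (x * ginv x)), <- (gmulV (ginv x)) at 1.
  rewrite <- gmulA, (gmulA (ginv x) x (ginv x)), gmulV, gmul1.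
  apply gmulV.
Qed.

Lemma mulg1 (x : G) : x * e = x.
Proof. rewrite <- (gmulV x), gmulA, mulgV, gmul1; reflexivity. Qed.

Lemma mulKg (x y : G) : ginv x * (x * y) = y.
Proof. rewrite gmulA, gmulV, gmul1; reflexivity. Qed.
Lemma mulKVg (x y : G) : x * (ginv x * y) = y.
Proof. rewrite gmulA, mulgV, gmul1; reflexivity. Qed.
Lemma mulgK (x y : G) : (x * y) * ginv y = x.
Proof. rewrite <- gmulA, mulgV, mulg1; reflexivity. Qed.
Lemma mulgKV (x y : G) : (x * ginv y) * y = x.
Proof. rewrite <- gmulA, gmulV, mulg1; reflexivity. Qed.

Lemma mulgI (x y z : G) : x * y = x * z -> y = z.
Proof. intro E. rewrite <- (mulKg x y), E, mulKg. reflexivity. Qed.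
Lemma invg_unique (x y : G) : x * y = e -> ginv x = y.
Proof. intro Hxy. rewrite <- (mulg1 (ginv x)), <- Hxy, mulKg. reflexivity. Qed.
Lemma invgK (x : G) : ginv (ginv x) = x.
Proof. apply invg_unique, gmulV. Qed.
Lemma invMg (x y : G) : ginv (x * y) = ginv y * ginv x.
Proof. apply invg_unique. rewrite gmulA, mulgK, mulgV. reflexivity. Qed.
Lemma invg1 : ginv e = e.
Proof. apply invg_unique, gmul1. Qed.

Lemma conjg_neq1 (x d : G) : x <> e -> ginv d * x * d <> e.
Proof.
  intros Nx E. apply Nx. rewrite <- (mulKVg d x), <- (mulgK (ginv d * x) d), E, gmul1, mulgV.
  reflexivity.
Qed.

End Groups.

#[export] Hint Rewrite @gmul1 @mulg1 @gmulV @mulgV @mulKg @mulKVg @mulgK @mulgKV @invgK @invMg @invg1 : grp.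
Ltac gsimpl := repeat (rewrite ?gmulA; autorewrite with grp); try reflexivity.

Lemma hom_on1 (G K : Group) (phi : G -> K) : is_hom_on (fun _ => True) phi -> phi gone = gone.
Proof.
  intro Hphi. apply (mulgI (phi gone)). rewrite mulg1, <- (Hphi gone gone I I), gmul1. reflexivity.
Qed.

Section Subgroups.
Context {G : Group} (S : G -> Prop) (HS : is_subgroup S).

Lemma group1 : S gone.
Proof. apply HS. Qed.
Lemma groupM x y : S x -> S y -> S (gmul x y).
Proof. apply HS. Qed.
Lemma groupV x : S x -> S (ginv x).
Proof. apply HS. Qed.
Lemma groupVr x : S (ginv x) -> S x.
Proof. intro Hx. rewrite <- (invgK x). apply groupV, Hx. Qed.
Lemma groupMl x y : S x -> S (gmul x y) -> S y.
Proof. intros Hx Hxy. rewrite <- (mulKg x y). apply groupM; [apply groupV|]; assumption. Qed.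
Lemma groupMr x y : S y -> S (gmul x y) -> S x.
Proof. intros Hy Hxy. rewrite <- (mulgK x y). apply groupM; [|apply groupV]; assumption. Qed.

End Subgroups.

Section PermGroup.
Variable X : Type.

Definition Perm := { p : (X -> X) * (X -> X) |
  (forall x, fst p (snd p x) = x) /\ (forall x, snd p (fst p x) = x) }.

Lemma Perm_ext (p q : Perm) : (forall x, fst (proj1_sig p) x = fst (proj1_sig q) x) ->
  (forall x, snd (proj1_sig p) x = snd (proj1_sig q) x) -> p = q.
Proof.
  destruct p as [[f g] Hp], q as [[f' g'] Hq]; simpl; intros E1 E2.
  apply functional_extensionality in E1. apply functional_extensionality in E2. subst.
  f_equal. apply proof_irrelevance.
Qed.

Definition perm_mul (p q : Perm) : Perm.
Proof.
  refine (exist _ (fun x => fst (proj1_sig p) (fst (proj1_sig q) x),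
                   fun x => snd (proj1_sig q) (snd (proj1_sig p) x)) _).
  destruct p as [[f g] [A B]], q as [[f' g'] [C D]]; simpl. split; intro x.
  - rewrite C, A; reflexivity.
  - rewrite B, D; reflexivity.
Defined.

Definition perm_inv (p : Perm) : Perm.
Proof.
  refine (exist _ (snd (proj1_sig p), fst (proj1_sig p)) _).
  destruct p as [[f g] [A B]]; simpl. split; assumption.
Defined.

Definition perm_one : Perm.
Proof. refine (exist _ (fun x => x, fun x => x) _). split; reflexivity. Defined.

Definition perm_group : Group.
Proof.
  refine (@Build_Group Perm perm_mul perm_inv perm_one _ _ _).
  - intros; apply Perm_ext; reflexivity.
  - intros; apply Perm_ext; reflexivity.
  - intros [[f g] [A B]]; apply Perm_ext; intro; simpl; auto.
Defined.

End PermGroup.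

Section TwistGroup.
Variable K : Group.

(* The semidirect product of [K] with the [GF(2)]-valued functions on [K], [K] acting by
   translation: [(a, c) (a', c') = (a a', c' + c (a' .))]. *)
Definition tw_mul (p q : K * (K -> bool)) : K * (K -> bool) :=
  (gmul (fst p) (fst q), fun x => xorb (snd q x) (snd p (gmul (fst q) x))).
Definition tw_inv (p : K * (K -> bool)) : K * (K -> bool) :=
  (ginv (fst p), fun x => snd p (gmul (ginv (fst p)) x)).

Definition twist_group : Group.
Proof.
  refine (@Build_Group (K * (K -> bool)) tw_mul tw_inv (gone, fun _ => false) _ _ _).
  - intros [a c] [a' c'] [a'' c'']. unfold tw_mul; simpl. f_equal.
    + apply gmulA.
    + apply functional_extensionality; intro x. rewrite gmulA, xorb_assoc. reflexivity.
  - intros [a c]. unfold tw_mul; simpl. f_equal.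
    + apply gmul1.
    + apply functional_extensionality; intro x. rewrite xorb_false_r. reflexivity.
  - intros [a c]. unfold tw_mul, tw_inv; simpl. f_equal.
    + apply gmulV.
    + apply functional_extensionality; intro x. rewrite mulKg, xorb_nilpotent. reflexivity.
Defined.

End TwistGroup.

(* Only the uniqueness half of the universal property is used: [g |-> (g, 0)] and
   [g |-> (g, [S .] + [S (g .)])] are homomorphisms into the twist group that agree on
   [G0] and [G1], so the cocycle vanishes and [S x] is equivalent to [S gone]. *)
Lemma amalgam_invariant_all (G : Group) (G0 G1 : G -> Prop) (S : G -> Prop) :
  is_amalgam G0 G1 -> S gone ->
  (forall y x, G0 y -> S x -> S (gmul y x)) -> (forall y x, G1 y -> S x -> S (gmul y x)) ->
  forall x, S x.
Proof.
  intros [HG0 [HG1 U]] S1 S0inv S1inv x.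
  set (sb := fun z => if excluded_middle_informative (S z) then true else false).
  set (phi := fun g : G => ((g, fun _ => false) : twist_group G)).
  set (psi := fun g : G => ((g, fun z => xorb (sb z) (sb (gmul g z))) : twist_group G)).
  assert (Hphi : forall D, is_hom_on D phi) by (intros D a b _ _; reflexivity).
  assert (Hpsi : is_hom_on (fun _ => True) psi).
  { intros a b _ _. unfold psi. simpl. unfold tw_mul. simpl. f_equal.
    apply functional_extensionality; intro z. rewrite gmulA.
    destruct (sb z), (sb (gmul b z)), (sb (gmul (gmul a b) z)); reflexivity. }
  assert (Hinv : forall D, is_subgroup D -> (forall y x, D y -> S x -> S (gmul y x)) ->
    forall g, D g -> psi g = phi g).
  { intros D HD Dinv g Dg. unfold psi, phi. f_equal. apply functional_extensionality; intro z.
    unfold sb. destruct (excluded_middle_informative (S z)) as [A|A];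
      destruct (excluded_middle_informative (S (gmul g z))) as [B|B]; auto.
    - exfalso. apply B, Dinv; assumption.
    - exfalso. apply A. rewrite <- (mulKg g z). apply Dinv; [apply groupV|]; assumption. }
  destruct (U (twist_group G) phi phi (Hphi _) (Hphi _) (fun _ _ _ => eq_refl)) as [_ Uq].
  pose proof (Uq phi psi (Hphi _) Hpsi (fun _ _ => eq_refl) (fun _ _ => eq_refl)
     (Hinv G0 HG0 S0inv) (Hinv G1 HG1 S1inv) x) as E.
  injection E. intro E2. apply (f_equal (fun f => f gone)) in E2. rewrite mulg1 in E2.
  unfold sb in E2. destruct (excluded_middle_informative (S gone)); [|contradiction].
  destruct (excluded_middle_informative (S x)); [assumption|discriminate].
Qed.

Section Amalgam.
Variables (G : Group) (G0 G1 : G -> Prop).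
Hypothesis Ham : is_amalgam G0 G1.
Hypothesis Hnd : nondegenerate G G0 G1.
Local Notation H := (Hsub G G0 G1).
Local Notation Gj := (Gj G G0 G1).
Local Notation "x * y" := (gmul x y).
Local Notation e := (@gone G).
Local Notation dec := excluded_middle_informative.

Lemma Gj_subgroup j : is_subgroup (Gj j).
Proof. destruct Ham as [A [B _]]; destruct j; assumption. Qed.

Lemma H_subgroup : is_subgroup H.
Proof.
  destruct Ham as [A [B _]]. split; [|split].
  - split; apply group1; assumption.
  - intros x y [] []; split; apply groupM; assumption.
  - intros x []; split; apply groupV; assumption.
Qed.

Lemma memH1 : H e. Proof. apply (group1 _ H_subgroup). Qed.
Lemma memHM x y : H x -> H y -> H (x * y). Proof. apply (groupM _ H_subgroup). Qed.
Lemma memHV x : H x -> H (ginv x). Proof. apply (groupV _ H_subgroup). Qed.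
Lemma memHMl x y : H x -> H (x * y) -> H y. Proof. apply (groupMl _ H_subgroup). Qed.
Lemma memHMr x y : H y -> H (x * y) -> H x. Proof. apply (groupMr _ H_subgroup). Qed.
Lemma memG1 j : Gj j e. Proof. apply (group1 _ (Gj_subgroup j)). Qed.
Lemma memGM j x y : Gj j x -> Gj j y -> Gj j (x * y). Proof. apply (groupM _ (Gj_subgroup j)). Qed.
Lemma memGV j x : Gj j x -> Gj j (ginv x). Proof. apply (groupV _ (Gj_subgroup j)). Qed.
Lemma memGVr j x : Gj j (ginv x) -> Gj j x. Proof. apply (groupVr _ (Gj_subgroup j)). Qed.
Lemma memGMl j x y : Gj j x -> Gj j (x * y) -> Gj j y. Proof. apply (groupMl _ (Gj_subgroup j)). Qed.
Lemma memH_Gj j x : H x -> Gj j x.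
Proof. intros []; destruct j; assumption. Qed.
Lemma memH_both j x : Gj j x -> Gj (negb j) x -> H x.
Proof. destruct j; split; assumption. Qed.

(** * Reduced words *)

Local Notation letter := (bool * G)%type.

Fixpoint reduced (l : list letter) : Prop :=
  match l with
  | [] => True
  | (k,x)::l' => Gj k x /\ ~ H x /\ reduced l' /\
      match l' with [] => True | (k',_)::_ => k' = negb k end
  end.

Fixpoint wprod (l : list letter) : G :=
  match l with [] => e | (_,x)::l' => x * wprod l' end.

(* The side [true] returned for the empty word is a junk value. *)
Definition wfirst (l : list letter) := fst (hd (true, e) l).
Definition wlast (l : list letter) := fst (last l (true, e)).

Definition joinable (l1 l2 : list letter) : Prop :=
  match l2 with [] => True | (k,_)::_ =>
    match l1 with [] => True | _ => k = negb (wlast l1) end end.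

Definition wrev (l : list letter) : list letter :=
  map (fun p => (fst p, ginv (snd p))) (rev l).

Lemma wprod_cat l1 l2 : wprod (l1 ++ l2) = wprod l1 * wprod l2.
Proof. induction l1 as [|[k x] l IH]; simpl; [|rewrite IH]; gsimpl. Qed.

Lemma wlast_cons a l : l <> [] -> wlast (a :: l) = wlast l.
Proof. destruct l; [congruence|reflexivity]. Qed.

Lemma wfirst_rcons w a : w <> [] -> wfirst (w ++ [a]) = wfirst w.
Proof. destruct w; [congruence|reflexivity]. Qed.

Lemma wlast_rcons w k y : wlast (w ++ [(k,y)]) = k.
Proof. unfold wlast. rewrite last_last. reflexivity. Qed.

Lemma wrev_cons a l : wrev (a :: l) = wrev l ++ [(fst a, ginv (snd a))].
Proof. unfold wrev. simpl. rewrite map_app. reflexivity. Qed.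

Lemma wprod_wrev l : wprod (wrev l) = ginv (wprod l).
Proof.
  induction l as [|[k x] l IH].
  - simpl. rewrite invg1; reflexivity.
  - rewrite wrev_cons, wprod_cat, IH. simpl. gsimpl.
Qed.

Lemma wfirst_wrev l : wfirst (wrev l) = wlast l.
Proof.
  unfold wfirst, wlast, wrev. rewrite <- rev_involutive with (l := l) at 2.
  destruct (rev l) as [|a r]; simpl; [reflexivity|].
  rewrite last_last. reflexivity.
Qed.

Lemma wlast_wrev l : l <> [] -> wlast (wrev l) = wfirst l.
Proof.
  destruct l as [|a l]; [congruence|]. intros _. rewrite wrev_cons. unfold wlast.
  rewrite last_last. reflexivity.
Qed.

Lemma reduced_cat l1 l2 : reduced l1 -> reduced l2 -> joinable l1 l2 -> reduced (l1 ++ l2).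
Proof.
  induction l1 as [|[k x] l IH]; simpl; auto.
  intros [A [B [C D]]] R2 Cp. split; [exact A|]. split; [exact B|]. split.
  - apply IH; auto. destruct l2 as [|[k2 x2] l2]; simpl; auto.
    destruct l as [|a l]; auto.
  - destruct l as [|[k' x'] l].
    + simpl. destruct l2 as [|[k2 x2] l2]; simpl; auto.
    + simpl. exact D.
Qed.

Lemma reduced_catK l1 l2 : reduced (l1 ++ l2) -> reduced l1 /\ reduced l2.
Proof.
  induction l1 as [|[k x] l IH]; simpl; auto.
  intros [A [B [C D]]]. destruct (IH C) as [R1 R2]. repeat split; auto.
  destruct l as [|[k' x'] l]; simpl in *; auto.
Qed.

Lemma reduced_rcons l k x : reduced l -> Gj k x -> ~ H x -> (l = [] \/ k = negb (wlast l)) ->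
  reduced (l ++ [(k,x)]).
Proof.
  intros R A B C. apply reduced_cat; simpl; auto. destruct l; auto. destruct C; [discriminate|auto].
Qed.

Lemma reduced_set_last w k y y' : reduced (w ++ [(k,y)]) -> Gj k y' -> ~ H y' -> reduced (w ++ [(k,y')]).
Proof.
  induction w as [|[k0 x0] w IH]; simpl.
  - intros [A [B [C D]]] Gy Ny. auto.
  - intros [A [B [C D]]] Gy Ny. split; [auto|]. split; [auto|]. split; [apply IH; auto|].
    destruct w as [|[k1 x1] w]; simpl in *; auto.
Qed.

Lemma reduced_wrev l : reduced l -> reduced (wrev l).
Proof.
  induction l as [|[k x] l IH]; simpl; auto.
  intros [A [B [C D]]]. rewrite wrev_cons. simpl. apply reduced_rcons; auto.
  - apply memGV; assumption.
  - intro Hx. apply B. apply (groupVr _ H_subgroup); assumption.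
  - destruct l as [|[k' x'] l]; [left; reflexivity|]. right.
    rewrite wlast_wrev by discriminate. simpl. subst k'. destruct k; reflexivity.
Qed.

Lemma reduced_mulH h k x l : H h -> reduced ((k,x)::l) -> reduced ((k, h * x)::l).
Proof.
  simpl. intros Hh [A [B [C D]]]. repeat split; auto.
  - apply memGM; auto. apply memH_Gj; auto.
  - intro E. apply B. apply (memHMl h x); auto.
Qed.

(* [begins j t]: the path in [T] from the edge [H] to the edge [tH] leaves [H] through the
   vertex [G_j]. *)
Definition begins (j : bool) (t : G) : Prop :=
  exists l, reduced l /\ l <> [] /\ wfirst l = j /\ H (ginv (wprod l) * t).

Definition cone0 (l : bool) (t : G) : Prop := H t \/ begins l t.

Lemma begins_mulHl j h t : H h -> begins j t -> begins j (h * t).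
Proof.
  intros Hh [[|[k x] l] [R [N [F Ht]]]]; [congruence|].
  exists ((k, h*x)::l). split; [apply reduced_mulH; auto|]. split; [discriminate|]. split; [exact F|].
  simpl in *. gsimpl. rewrite invMg in Ht. exact Ht.
Qed.

Lemma begins_mulHr j h t : H h -> begins j t -> begins j (t * h).
Proof.
  intros Hh [l [R [N [F Ht]]]]. exists l. split; [|split; [|split]]; auto.
  rewrite gmulA. apply memHM; auto.
Qed.

Lemma begins_wprod l : reduced l -> l <> [] -> begins (wfirst l) (wprod l).
Proof. intros R N. exists l. split; [|split; [|split]]; auto. gsimpl. apply memH1. Qed.

Lemma begins_wprod_cons k x l : reduced ((k,x)::l) -> begins k (wprod ((k,x)::l)).
Proof. intro R. exact (begins_wprod ((k,x)::l) R ltac:(discriminate)). Qed.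

Lemma begins_cat l u : reduced l -> l <> [] -> cone0 (negb (wlast l)) u ->
  begins (wfirst l) (wprod l * u).
Proof.
  intros R N [Hu | [v [Rv [Nv [Fv Hv]]]]].
  - apply begins_mulHr; auto. apply begins_wprod; auto.
  - exists (l ++ v). split; [apply reduced_cat; auto|].
    + destruct v as [|[k x] v]; [congruence|]. destruct l; [congruence|]. simpl in Fv |- *. exact Fv.
    + split. { destruct l; [congruence|]; discriminate. }
      split. { destruct l; [congruence|]; reflexivity. }
      rewrite wprod_cat, invMg. gsimpl. exact Hv.
Qed.

Lemma cone0_mulHl l h t : H h -> cone0 l t -> cone0 l (h * t).
Proof. intros Hh [A|A]; [left; apply memHM|right; apply begins_mulHl]; auto. Qed.

Lemma cone0_mulHr l h t : H h -> cone0 l t -> cone0 l (t * h).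
Proof. intros Hh [A|A]; [left; apply memHM|right; apply begins_mulHr]; auto. Qed.

(** * Normal forms *)

(* [rep a] is a chosen representative of the coset [aH]; normal words use only such
   representatives, so that the action of [G_j] on them below is well defined. *)
Definition rep (a : G) : G := epsilon (inhabits e) (fun r => H (ginv a * r)).
Lemma rep_coset a : H (ginv a * rep a).
Proof. unfold rep. apply epsilon_spec. exists a. gsimpl. apply memH1. Qed.
Lemma rep_eq a b : H (ginv a * b) -> rep a = rep b.
Proof.
  intro Hab. unfold rep. f_equal. apply functional_extensionality. intro r.
  apply propositional_extensionality. split; intro Hr.
  - replace (ginv b * r) with (ginv (ginv a * b) * (ginv a * r)) by gsimpl. apply memHM; [apply memHV|]; auto.
  - replace (ginv a * r) with ((ginv a * b) * (ginv b * r)) by gsimpl. apply memHM; auto.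
Qed.
Lemma rep_idem a : rep (rep a) = rep a.
Proof. symmetry. apply rep_eq. apply rep_coset. Qed.
Lemma rep_cosetV a : H (ginv (rep a) * a).
Proof. replace (ginv (rep a) * a) with (ginv (ginv a * rep a)) by gsimpl. apply memHV, rep_coset. Qed.
Lemma rep_Gj j a : Gj j a -> Gj j (rep a).
Proof.
  intro Ha. replace (rep a) with (a * (ginv a * rep a)) by gsimpl.
  apply memGM; [exact Ha|apply memH_Gj, rep_coset].
Qed.
Lemma rep_notH a : ~ H a -> ~ H (rep a).
Proof.
  intros Na Hr. apply Na. replace a with (rep a * (ginv (rep a) * a)) by gsimpl.
  apply memHM; [exact Hr|apply rep_cosetV].
Qed.

Fixpoint normal (l : list letter) : Prop :=
  match l with
  | [] => True
  | (k,x)::l' => Gj k x /\ ~ H x /\ rep x = x /\ normal l' /\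
      match l' with [] => True | (k',_)::_ => k' = negb k end
  end.

(* Van der Waerden's action of [G_j] on normal words: [hmul h l] is the normal word of [h l] for
   [h] in [H], and [push j b l] that of [b l] when [l] does not start in [G_j]. *)
Fixpoint hmul (g : G) (l : list letter) : list letter :=
  match l with
  | [] => []
  | (k,r)::l' => (k, rep (g * r)) :: hmul (ginv (rep (g * r)) * (g * r)) l'
  end.

Lemma hmul_sides g l : map fst (hmul g l) = map fst l.
Proof. revert g; induction l as [|[k r] l IH]; intro g; simpl; auto. rewrite IH; auto. Qed.

Definition opens_after (j : bool) (l : list letter) : Prop :=
  match l with [] => True | (k,_)::_ => k = negb j end.

Lemma hmul_normal g l : H g -> normal l -> normal (hmul g l).
Proof.
  revert g; induction l as [|[k r] l IH]; intros g Hg; simpl; auto.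
  intros [A [B [C [D E]]]].
  assert (Gk : Gj k (g * r)) by (apply memGM; auto; apply memH_Gj; auto).
  assert (Nk : ~ H (g * r)) by (intro Habs; apply B; apply (memHMl g r); auto).
  split; [apply rep_Gj; auto|]. split; [apply rep_notH; auto|]. split; [apply rep_idem|].
  split. { apply IH; auto. apply rep_cosetV. }
  destruct l as [|[k' r'] l]; simpl; auto.
Qed.

Lemma hmul1 l : normal l -> hmul e l = l.
Proof.
  induction l as [|[k r] l IH]; simpl; auto. intros [A [B [C [D E]]]].
  rewrite gmul1, C. gsimpl. rewrite IH; auto.
Qed.

Lemma hmulA g g' l : H g -> H g' -> normal l -> hmul g (hmul g' l) = hmul (g * g') l.
Proof.
  revert g g'; induction l as [|[k r] l IH]; intros g g' Hg Hg' V; simpl; auto.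
  destruct V as [A [B [C [D E]]]].
  assert (R : rep (g * rep (g' * r)) = rep (g * g' * r)).
  { apply rep_eq. replace (ginv (g * rep (g' * r)) * (g * g' * r)) with (ginv (rep (g' * r)) * (g' * r)) by gsimpl.
    apply rep_cosetV. }
  rewrite R. f_equal. rewrite IH; auto.
  - f_equal. rewrite <- R. gsimpl.
  - replace (ginv (rep (g * g' * r)) * (g * rep (g' * r)))
      with (ginv (ginv (g * rep (g' * r)) * rep (g * rep (g' * r)))) by (rewrite R; gsimpl).
    apply memHV, rep_coset.
  - apply rep_cosetV.
Qed.

Definition push (j : bool) (b : G) (l : list letter) : list letter :=
  if dec (H b) then hmul b l else (j, rep b) :: hmul (ginv (rep b) * b) l.

Definition wact (j : bool) (a : G) (l : list letter) : list letter :=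
  match l with
  | (k,r)::l' => if Bool.eqb k j then push j (a * r) l' else push j a l
  | [] => push j a []
  end.

Lemma push_normal j b l : Gj j b -> normal l -> opens_after j l -> normal (push j b l).
Proof.
  intros Gb V N. unfold push. destruct (dec (H b)) as [Hb|Nb].
  - apply hmul_normal; auto.
  - simpl. split; [apply rep_Gj; auto|]. split; [apply rep_notH; auto|]. split; [apply rep_idem|].
    split. { apply hmul_normal; auto. apply rep_cosetV. }
    pose proof (hmul_sides (ginv (rep b) * b) l) as T.
    destruct (hmul (ginv (rep b) * b) l) as [|[k' r'] l'] eqn:Eh; auto.
    destruct l as [|[k r] l]; simpl in T; try discriminate. injection T; intros; subst. exact N.
Qed.

Lemma wact_normal j a l : Gj j a -> normal l -> normal (wact j a l).
Proof.
  intros Ga V. destruct l as [|[k r] l].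
  - apply push_normal; simpl; auto.
  - simpl. destruct (Bool.eqb k j) eqn:Ek.
    + apply Bool.eqb_prop in Ek. subst k. destruct V as [A [B [C [D E]]]].
      apply push_normal; auto. all: try (apply memGM; auto). all: try (destruct l as [|[]]; simpl; auto).
    + apply push_normal; auto. simpl. destruct k, j; simpl in *; congruence.
Qed.

Lemma push_hmul j c u l : Gj j c -> H u -> normal l -> push j c (hmul u l) = push j (c * u) l.
Proof.
  intros Gc Hu V. unfold push. destruct (dec (H c)) as [Hc|Nc]; destruct (dec (H (c * u))) as [Hcu|Ncu].
  - apply hmulA; auto.
  - exfalso. apply Ncu. apply memHM; auto.
  - exfalso. apply Nc. apply (memHMr c u); auto.
  - assert (R : rep c = rep (c * u)) by (apply rep_eq; gsimpl; auto).
    rewrite <- R. f_equal. rewrite hmulA; auto.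
    + f_equal. gsimpl.
    + apply rep_cosetV.
Qed.

Lemma wact_push j a b l : Gj j a -> Gj j b -> normal l -> opens_after j l -> wact j a (push j b l) = push j (a * b) l.
Proof.
  intros Ga Gb V N. unfold push at 1. destruct (dec (H b)) as [Hb|Nb].
  - rewrite <- push_hmul; auto.
    pose proof (hmul_sides b l) as T.
    destruct (hmul b l) as [|[k r] l'] eqn:Eh; simpl; auto.
    destruct l as [|[k0 r0] l]; simpl in T; try discriminate. injection T; intros; subst.
    simpl in N. subst k0. destruct j; simpl; reflexivity.
  - simpl. rewrite Bool.eqb_reflx. rewrite push_hmul; auto.
    + f_equal. gsimpl.
    + apply memGM; auto. apply rep_Gj; auto.
    + apply rep_cosetV.
Qed.

Lemma wactM j a b l : Gj j a -> Gj j b -> normal l -> wact j (a * b) l = wact j a (wact j b l).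
Proof.
  intros Ga Gb V. destruct l as [|[k r] l].
  - simpl. rewrite wact_push; simpl; auto.
  - simpl. destruct (Bool.eqb k j) eqn:Ek.
    + apply Bool.eqb_prop in Ek. subst k. destruct V as [A [B [C [D E]]]].
      rewrite wact_push; auto. all: try (apply memGM; auto). all: try (destruct l as [|[]]; simpl; auto).
      all: try (f_equal; gsimpl).
    + rewrite wact_push; auto. simpl. destruct k, j; simpl in *; congruence.
Qed.

Lemma wact1 j l : normal l -> wact j e l = l.
Proof.
  intros V. destruct l as [|[k r] l].
  - unfold wact, push. destruct (dec (H e)); auto. exfalso; auto using memH1.
  - simpl. destruct (Bool.eqb k j) eqn:Ek.
    + apply Bool.eqb_prop in Ek. subst k. destruct V as [A [B [C [D E]]]].
      unfold push. rewrite gmul1. destruct (dec (H r)); [contradiction|]. rewrite C. gsimpl. rewrite hmul1; auto.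
    + unfold push. destruct (dec (H e)) as [_|N]; [|exfalso; auto using memH1].
      change (hmul e ((k,r)::l) = (k,r)::l). apply hmul1. exact V.
Qed.

Lemma wact_H j h l : H h -> normal l -> wact j h l = hmul h l.
Proof.
  intros Hh V. destruct l as [|[k r] l].
  - unfold wact, push. destruct (dec (H h)); [reflexivity|contradiction].
  - simpl. destruct (Bool.eqb k j) eqn:Ek.
    + apply Bool.eqb_prop in Ek. subst k. destruct V as [A [B [C [D E]]]].
      unfold push. destruct (dec (H (h * r))) as [Habs|_]; [|reflexivity].
      exfalso. apply B. apply (memHMl h r); auto.
    + unfold push. destruct (dec (H h)); [reflexivity|contradiction].
Qed.

Lemma opens_after_sides j l1 l2 : map fst l1 = map fst l2 -> opens_after j l2 -> opens_after j l1.
Proof.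
  destruct l1 as [|[]], l2 as [|[]]; simpl; try discriminate; auto.
  intro E; injection E; intros; subst; auto.
Qed.

Lemma wact_sides j a l : Gj j a -> ~ H a -> opens_after j l -> map fst (wact j a l) = j :: map fst l.
Proof.
  intros Ga Na N. destruct l as [|[k r] l].
  - simpl. unfold push. destruct (dec (H a)); [contradiction|reflexivity].
  - simpl in N. subst k. simpl. replace (Bool.eqb (negb j) j) with false by (destruct j; reflexivity).
    unfold push. destruct (dec (H a)); [contradiction|]. simpl. rewrite hmul_sides. reflexivity.
Qed.

Definition NWord := { l : list letter | normal l }.
Lemma NWord_ext (x y : NWord) : proj1_sig x = proj1_sig y -> x = y.
Proof. destruct x, y; simpl; intro E; subst. f_equal. apply proof_irrelevance. Qed.

(* Outside [G_j] the action is the identity, a junk value never used. *)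
Definition nw_act (j : bool) (a : G) (x : NWord) : NWord :=
  match dec (Gj j a) with
  | left Ha => exist _ (wact j a (proj1_sig x)) (wact_normal j a _ Ha (proj2_sig x))
  | right _ => x
  end.

Lemma nw_actM j a b x : Gj j a -> Gj j b -> nw_act j (a * b) x = nw_act j a (nw_act j b x).
Proof.
  intros Ga Gb. unfold nw_act.
  destruct (dec (Gj j (a * b))) as [Gab|N]; [|exfalso; apply N, memGM; auto].
  destruct (dec (Gj j b)) as [Gb'|N]; [|contradiction].
  destruct (dec (Gj j a)) as [Ga'|N]; [|contradiction].
  apply NWord_ext. simpl. apply wactM; auto. apply (proj2_sig x).
Qed.

Lemma nw_actKV j a x : nw_act j a (nw_act j (ginv a) x) = x.
Proof.
  destruct (dec (Gj j a)) as [Ga|Na].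
  - rewrite <- nw_actM; auto. 2: apply memGV; auto. rewrite mulgV.
    unfold nw_act. destruct (dec (Gj j e)) as [He|N]; [|exfalso; apply N, memG1; auto].
    apply NWord_ext. simpl. apply wact1. apply (proj2_sig x).
  - assert (Nb : ~ Gj j (ginv a)) by (intro Z; apply Na; apply memGVr; auto).
    unfold nw_act. destruct (dec (Gj j (ginv a))); [contradiction|]. destruct (dec (Gj j a)); [contradiction|]. auto.
Qed.

Definition act_perm (j : bool) (a : G) : perm_group NWord.
Proof.
  refine (exist _ (nw_act j a, nw_act j (ginv a)) _). simpl. split; intro x.
  - apply nw_actKV.
  - pose proof (nw_actKV j (ginv a) x) as Z; rewrite invgK in Z; exact Z.
Defined.

Lemma act_perm_hom j : is_hom_on (Gj j) (act_perm j).
Proof.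
  intros a b Ga Gb. apply Perm_ext; intro x; simpl.
  - apply nw_actM; auto.
  - rewrite invMg. apply nw_actM; apply memGV; auto.
Qed.

Lemma nw_act_H j h x : H h -> proj1_sig (nw_act j h x) = hmul h (proj1_sig x).
Proof.
  intro Hh. unfold nw_act. destruct (dec (Gj j h)) as [Hh2|N]; [|exfalso; apply N, memH_Gj; auto].
  simpl. apply wact_H; auto. apply (proj2_sig x).
Qed.

Lemma act_perm_agree h : G0 h -> G1 h -> act_perm false h = act_perm true h.
Proof.
  intros A B. assert (Hh : H h) by (split; auto). apply Perm_ext; intro x; simpl; apply NWord_ext.
  - rewrite !nw_act_H; auto.
  - rewrite !nw_act_H; auto; apply memHV; auto.
Qed.

Section ActionOnNil.
Variable phi : G -> perm_group NWord.
Hypothesis phi_hom : is_hom_on (fun _ => True) phi.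
Hypothesis phi_G0 : forall x, G0 x -> phi x = act_perm false x.
Hypothesis phi_G1 : forall x, G1 x -> phi x = act_perm true x.

Definition act_on_nil (g : G) : list letter := proj1_sig (fst (proj1_sig (phi g)) (exist normal [] I)).

Lemma act_on_nil_sides l : reduced l -> map fst (act_on_nil (wprod l)) = map fst l.
Proof.
  induction l as [|[k x] l IH]; intro R.
  - unfold act_on_nil. simpl. rewrite (hom_on1 _ _ _ phi_hom). reflexivity.
  - destruct R as [A [B [C D]]].
    assert (Ex : phi x = act_perm k x) by (destruct k; [apply phi_G1|apply phi_G0]; exact A).
    assert (Step : act_on_nil (x * wprod l) = wact k x (act_on_nil (wprod l))).
    { unfold act_on_nil. rewrite phi_hom, Ex by exact I. simpl.
      unfold nw_act. destruct (dec (Gj k x)); [reflexivity|contradiction]. }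
    simpl wprod. rewrite Step, wact_sides; [simpl; rewrite IH; auto|assumption|assumption|].
    apply (opens_after_sides _ _ l); [apply IH, C|]. destruct l as [|[k' x'] l]; simpl; auto.
Qed.

Lemma act_on_nil_H h : H h -> act_on_nil h = [].
Proof.
  intro Hh. unfold act_on_nil. destruct Hh as [Hh0 Hh1]. rewrite phi_G0 by exact Hh0. simpl.
  rewrite nw_act_H by (split; assumption). reflexivity.
Qed.

End ActionOnNil.

(* The normal form theorem: acting on the empty normal word, [wprod l] produces a word with the
   sides of [l]. *)
Theorem reduced_notH l : reduced l -> l <> [] -> ~ H (wprod l).
Proof.
  intros R Nl Hl. destruct Ham as [_ [_ U]].
  destruct (U (perm_group NWord) (act_perm false) (act_perm true) (act_perm_hom false)
    (act_perm_hom true) act_perm_agree) as [[phi [Hphi [E0 E1]]] _].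
  pose proof (act_on_nil_sides phi Hphi E0 E1 l R) as Sides.
  rewrite (act_on_nil_H phi E0 _ Hl) in Sides. destruct l; [congruence|discriminate].
Qed.

Definition in_cones (x : G) : Prop := H x \/ begins false x \/ begins true x.

Lemma in_cones_begins j x : begins j x -> in_cones x.
Proof. destruct j; unfold in_cones; tauto. Qed.

Lemma begins_mulGj i j y x : Gj i y -> ~ H y -> begins j x -> in_cones (y * x).
Proof.
  intros Gy Ny [[|[k a] l'] [R [N [F Hl]]]]; [congruence|]. unfold wfirst in F. simpl in F. subst k.
  destruct (Bool.bool_dec i j) as [<-|Nij].
  - simpl in R. destruct R as [A [B [C D]]].
    destruct (dec (H (y * a))) as [Hya|Nya].
    + destruct l' as [|[k b] l''].
      * left. simpl in Hl. replace (y * x) with ((y * a) * (ginv (a * e) * x)) by gsimpl.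
        apply memHM; auto.
      * simpl in D. subst k. apply (in_cones_begins (negb i)).
        replace (y * x) with (wprod ((negb i, (y*a) * b) :: l'') * (ginv (wprod ((i,a)::(negb i,b)::l'')) * x))
          by (simpl; gsimpl).
        apply begins_mulHr; [assumption|]. apply begins_wprod_cons, reduced_mulH; auto.
    + apply (in_cones_begins i).
      replace (y * x) with (wprod ((i, y*a) :: l') * (ginv (wprod ((i,a)::l')) * x)) by (simpl; gsimpl).
      apply begins_mulHr; [assumption|]. apply begins_wprod_cons.
      split; [apply memGM; auto|]. split; auto.
  - apply (in_cones_begins i).
    replace (y * x) with (wprod ((i,y)::(j,a)::l') * (ginv (wprod ((j,a)::l')) * x)) by (simpl; gsimpl).
    apply begins_mulHr; [assumption|]. apply begins_wprod_cons.
    split; [auto|]. split; [auto|]. split; [exact R|]. destruct i, j; simpl; congruence.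
Qed.

Lemma in_cones_mulGj i y x : Gj i y -> in_cones x -> in_cones (y * x).
Proof.
  intros Gy Sx. destruct (dec (H y)) as [Hy|Ny].
  - destruct Sx as [Hx|[Px|Px]]; [left; apply memHM|right; left|right; right]; try apply begins_mulHl; auto.
  - destruct Sx as [Hx|[Px|Px]]; [|eapply begins_mulGj; eauto..].
    apply (in_cones_begins i). replace (y * x) with (wprod [(i,y)] * x) by (simpl; gsimpl).
    apply begins_mulHr; [assumption|]. apply begins_wprod_cons; simpl; auto.
Qed.

Theorem trichotomy x : in_cones x.
Proof.
  apply (amalgam_invariant_all G G0 G1); [exact Ham|left; apply memH1|..];
    intros; [apply (in_cones_mulGj false)|apply (in_cones_mulGj true)]; assumption.
Qed.

Lemma begins_notH j t : begins j t -> ~ H t.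
Proof.
  intros [l [R [N [F Hl]]]] Ht. apply (reduced_notH l R N).
  replace (wprod l) with (t * ginv (ginv (wprod l) * t)) by gsimpl. apply memHM; auto. apply memHV; auto.
Qed.

Lemma begins_disjoint j t : begins j t -> begins (negb j) t -> False.
Proof.
  intros [l1 [R1 [N1 [F1 H1']]]] [l2 [R2 [N2 [F2 H2']]]].
  apply (reduced_notH (wrev l2 ++ l1)).
  - apply reduced_cat; auto. apply reduced_wrev; auto.
    destruct l1 as [|[k x] l1]; [congruence|]. unfold wfirst in F1; simpl in F1. subst k.
    unfold joinable. rewrite (wlast_wrev l2 N2). rewrite F2.
    destruct (wrev l2); [exact I|]. destruct j; reflexivity.
  - destruct l1; [congruence|]. destruct (wrev l2); discriminate.
  - rewrite wprod_cat, wprod_wrev. 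
    replace (ginv (wprod l2) * wprod l1) with ((ginv (wprod l2) * t) * ginv (ginv (wprod l1) * t)) by gsimpl.
    apply memHM; auto. apply memHV; auto.
Qed.



(** * Half-trees moved off themselves *)

(* [cone c l] is the set of edges [aH] of the half-tree [c (H u C_l)], where [C_l] denotes the
   elements whose reduced form begins in [G_l]. *)
Definition cone (c : G) (l : bool) (a : G) : Prop := cone0 l (ginv c * a).

Definition moves_off (g c : G) (l : bool) : Prop :=
  forall b, cone c l b -> ~ cone c l (g * b).

Definition has_moved_subcone (g : G) (l : bool) : Prop :=
  exists c' l', (forall b, cone c' l' b -> cone0 l b) /\ moves_off g c' l'.

Lemma index2_witness j : exists a, Gj j a /\ ~ H a.
Proof.
  destruct Hnd as [A [B _]]. destruct j; [destruct B as [a B]|destruct A as [a A]]; exists a; exact B || exact A.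
Qed.

Lemma notH_wprod g : ~ H g -> exists w h, reduced w /\ w <> [] /\ H h /\ g = wprod w * h.
Proof.
  intro Ng. destruct (trichotomy g) as [Hg|[Pg|Pg]]; [contradiction| |];
    destruct Pg as [w [R [N [_ Hw]]]]; exists w, (ginv (wprod w) * g);
    (split; [|split; [|split]]); auto; gsimpl.
Qed.

Lemma cone0_or_begins j a : cone0 j a \/ begins (negb j) a.
Proof. unfold cone0. destruct (trichotomy a) as [A|[A|A]]; destruct j; simpl; tauto. Qed.

Lemma cone0_disjoint l t : cone0 l t -> begins (negb l) t -> False.
Proof. intros [A|A] B; [exact (begins_notH _ _ B A)|exact (begins_disjoint _ _ A B)]. Qed.

Lemma cone1 l a : cone e l a <-> cone0 l a.
Proof. unfold cone. rewrite invg1, gmul1. tauto. Qed.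

Lemma cone_self c l : cone c l c.
Proof. unfold cone. left. gsimpl. apply memH1. Qed.

Lemma cone_wprod_begins w c b : reduced w -> w <> [] -> wprod w = c -> cone c (negb (wlast w)) b ->
  begins (wfirst w) b.
Proof.
  intros R N <- Cb. replace b with (wprod w * (ginv (wprod w) * b)) by gsimpl. apply begins_cat; auto.
Qed.

Lemma moves_off_inv g c l : moves_off g c l -> moves_off (ginv g) c l.
Proof. intros M b Cb Cgb. apply (M _ Cgb). rewrite gmulA, mulgV, gmul1. exact Cb. Qed.

Lemma moves_off_of_begins g c l j : (forall b, cone c l b -> cone0 j b) ->
  (forall b, cone c l b -> begins (negb j) (g * b)) -> moves_off g c l.
Proof. intros Inc Out b Cb Cgb. exact (cone0_disjoint j _ (Inc _ Cgb) (Out _ Cb)). Qed.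

(* Replacing the last letter [y] of [g = w y h] by [y h x] keeps the word reduced, so [g] maps the
   half-tree [x C_{1-s}] to elements beginning like [w]. *)
Lemma begins_wprod_rcons_mul w s y h x b : reduced (w ++ [(s,y)]) -> H h -> Gj s x ->
  ~ H (y * h * x) -> cone x (negb s) b -> begins (wfirst (w ++ [(s,y)])) (wprod (w ++ [(s,y)]) * h * b).
Proof.
  intros R Hh Gx Nyhx Cb.
  assert (Gy : Gj s y) by (destruct (reduced_catK _ _ R) as [_ [Gy _]]; exact Gy).
  assert (Gyhx : Gj s (y * h * x)) by (apply memGM; [apply memGM; [|apply memH_Gj]|]; assumption).
  assert (R' : reduced (w ++ [(s, y * h * x)])) by (eapply reduced_set_last; eauto).
  assert (F : wfirst (w ++ [(s, y * h * x)]) = wfirst (w ++ [(s, y)])) by (destruct w; reflexivity).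
  rewrite <- F. replace (wprod (w ++ [(s,y)]) * h * b) with (wprod (w ++ [(s, y * h * x)]) * (ginv x * b))
    by (rewrite !wprod_cat; simpl; gsimpl).
  apply begins_cat; [exact R'|destruct w; discriminate|]. rewrite wlast_rcons. exact Cb.
Qed.

Lemma index3_avoid s z : index_ge3 G G0 G1 (Gj s) -> exists x, Gj s x /\ ~ H x /\ ~ H (z * x).
Proof.
  intros [a1 [a2 [Ga1 [Ga2 [Na1 [Na2 Na12]]]]]].
  destruct (classic (H (z * a1))) as [C1|C1]; [|exists a1; auto].
  destruct (classic (H (z * a2))) as [C2|C2]; [|exists a2; auto].
  exfalso. apply Na12. replace (ginv a1 * a2) with (ginv (z * a1) * (z * a2)) by gsimpl.
  apply memHM; [apply memHV|]; assumption.
Qed.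

Section MixedWord.
Variables (w : list letter) (l : bool) (y h : G).
Hypotheses (Rw : reduced (w ++ [(l,y)])) (Fw : wfirst (w ++ [(l,y)]) = negb l) (Hh : H h).

Lemma moved_subcone_mixed_extend x : Gj l x -> ~ H x -> ~ H (y * h * x) ->
  has_moved_subcone (wprod (w ++ [(l,y)]) * h) l.
Proof.
  intros Gx Nx Nyhx.
  assert (Inc : forall b, cone x (negb l) b -> begins l b).
  { intros b. apply (cone_wprod_begins [(l,x)]); [simpl; auto|discriminate|simpl; gsimpl]. }
  exists x, (negb l). split; [intros b Cb; right; apply Inc, Cb|].
  apply (moves_off_of_begins _ _ _ l); [intros b Cb; right; apply Inc, Cb|].
  intros b Cb. rewrite <- Fw. apply (begins_wprod_rcons_mul _ _ _ _ x); auto.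
Qed.

(* Otherwise [y h] maps [G_l \ H] into [H], so [[G_l : H] = 2] and [[G_{1-l} : H] >= 3]; one then
   extends the letter before [y] instead. *)
Lemma moved_subcone_mixed_shorten : (forall x, Gj l x -> ~ H x -> H (y * h * x)) ->
  has_moved_subcone (wprod (w ++ [(l,y)]) * h) l.
Proof.
  intros Hall.
  assert (I3 : index_ge3 G G0 G1 (Gj (negb l))).
  { assert (N3 : ~ index_ge3 G G0 G1 (Gj l)).
    { intros [a [b [Ga [Gb [Na [Nb Nab]]]]]]. apply Nab.
      replace (ginv a * b) with (ginv (y * h * a) * (y * h * b)) by gsimpl.
      apply memHM; [apply memHV|]; auto. }
    destruct Hnd as [_ [_ [I0|I1]]]; destruct l; simpl in *; tauto. }
  destruct (index2_witness l) as [x0 [Gx0 Nx0]].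
  assert (Nw : w <> []) by (intro E; subst w; destruct l; discriminate).
  destruct (exists_last Nw) as [w2 [[k y1] Ew]]. subst w.
  destruct (reduced_catK _ _ Rw) as [Rw2 _].
  assert (Ek : k = negb l).
  { pose proof Rw as R'. rewrite <- app_assoc in R'.
    destruct (reduced_catK _ _ R') as [_ [_ [_ [_ D]]]]. simpl in D. rewrite D. destruct k; reflexivity. }
  subst k. set (hh := y * h * x0). assert (Hhh : H hh) by (apply Hall; auto).
  assert (Gy1 : Gj (negb l) y1) by (destruct (reduced_catK _ _ Rw2) as [_ [Gy1 _]]; exact Gy1).
  destruct (index3_avoid (negb l) (y1 * hh) I3) as [w0 [Gw0 [Nw0 Nw0']]].
  assert (Inc : forall b, cone (x0 * w0) l b -> begins l b).
  { intros b Cb. apply (cone_wprod_begins [(l,x0); (negb l,w0)] (x0 * w0));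
      [simpl; auto 10|discriminate|simpl; gsimpl|].
    unfold wlast; simpl. rewrite negb_involutive. exact Cb. }
  exists (x0 * w0), l. split; [intros b Cb; right; apply Inc, Cb|].
  apply (moves_off_of_begins _ _ _ l); [intros b Cb; right; apply Inc, Cb|].
  intros b Cb.
  assert (F2 : wfirst (w2 ++ [(negb l, y1)]) = negb l) by (destruct w2; [reflexivity|exact Fw]).
  rewrite <- F2 at 1.
  assert (E : wprod ((w2 ++ [(negb l, y1)]) ++ [(l, y)]) * h * b =
    wprod (w2 ++ [(negb l, y1)]) * hh * (ginv x0 * b))
    by (unfold hh; rewrite !wprod_cat; simpl; gsimpl).
  rewrite E. apply (begins_wprod_rcons_mul _ _ _ _ w0); auto.
  unfold cone in *. rewrite negb_involutive.
  replace (ginv w0 * (ginv x0 * b)) with (ginv (x0 * w0) * b) by gsimpl. exact Cb.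
Qed.

Lemma moved_subcone_mixed : has_moved_subcone (wprod (w ++ [(l,y)]) * h) l.
Proof.
  destruct (classic (exists x, Gj l x /\ ~ H x /\ ~ H (y * h * x))) as [[x [Gx [Nx Nyhx]]]|Nall].
  - exact (moved_subcone_mixed_extend x Gx Nx Nyhx).
  - apply moved_subcone_mixed_shorten. intros x Gx Nx. apply NNPP. intro Nyhx. apply Nall. exists x; auto.
Qed.

End MixedWord.

Lemma moved_subcone_mixed_word w h l : reduced w -> w <> [] -> H h -> wfirst w = negb l ->
  wlast w = l -> has_moved_subcone (wprod w * h) l.
Proof.
  intros R N Hh F L. destruct (exists_last N) as [wi [[k y] ->]].
  rewrite wlast_rcons in L. subst k. apply moved_subcone_mixed; assumption.
Qed.

Lemma moved_subcone_same w h l : reduced w -> w <> [] -> H h -> wfirst w = l -> wlast w = l ->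
  has_moved_subcone (wprod w * h) l.
Proof.
  intros R N Hh F L. set (g := wprod w * h).
  assert (Pl : forall b, cone g (negb l) b -> begins l b).
  { intros b Cb. replace b with (wprod w * (h * (ginv g * b))) by (unfold g; gsimpl).
    rewrite <- F. apply begins_cat; auto. rewrite L. apply cone0_mulHl; auto. }
  exists g, (negb l). split; [intros b Cb; right; apply Pl, Cb|].
  intros b Cb Cgb. unfold cone in Cgb. rewrite mulKg in Cgb.
  apply (cone0_disjoint (negb l) b Cgb). rewrite negb_involutive. apply Pl, Cb.
Qed.

Lemma moved_subcone_apart w h l : reduced w -> w <> [] -> H h -> wfirst w = negb l ->
  wlast w = negb l -> has_moved_subcone (wprod w * h) l.
Proof.
  intros R N Hh F L. exists e, l. split; [intros b Cb; apply cone1, Cb|].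
  apply (moves_off_of_begins _ _ _ l); [intros b Cb; apply cone1, Cb|].
  intros b Cb. apply (proj1 (cone1 l b)) in Cb. rewrite <- F, <- gmulA. apply begins_cat; auto.
  rewrite L, negb_involutive. apply cone0_mulHl; auto.
Qed.

Lemma has_moved_subcone_inv g l : has_moved_subcone g l -> has_moved_subcone (ginv g) l.
Proof. intros [c [l' [Inc M]]]. exists c, l'. split; [exact Inc|apply moves_off_inv, M]. Qed.

Lemma wprod_inv_reduced w h : reduced w -> w <> [] -> H h -> exists w', reduced w' /\ w' <> [] /\
  wfirst w' = wlast w /\ wlast w' = wfirst w /\ ginv (wprod w * h) = wprod w' * e.
Proof.
  intros R N Hh.
  assert (Ni : wrev w <> []) by (destruct w; [congruence|]; unfold wrev; simpl; destruct (rev w); discriminate).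
  pose proof (reduced_wrev w R) as Rr. pose proof (wfirst_wrev w) as Fr. pose proof (wlast_wrev w N) as Lr.
  pose proof (wprod_wrev w) as Pr.
  destruct (wrev w) as [|[k x] r]; [congruence|].
  exists ((k, ginv h * x) :: r). split; [apply reduced_mulH; [apply memHV|]; assumption|].
  split; [discriminate|]. split; [exact Fr|]. split.
  - rewrite <- Lr. destruct r; [reflexivity|]. rewrite !wlast_cons by discriminate. reflexivity.
  - rewrite invMg, <- Pr. simpl. gsimpl.
Qed.

Lemma neq_negb (b l : bool) : b <> l -> b = negb l.
Proof. destruct b, l; simpl; congruence. Qed.

Lemma moved_subcone g l : ~ H g -> has_moved_subcone g l.
Proof.
  intro Ng. destruct (notH_wprod g Ng) as [w [h [R [N [Hh ->]]]]].
  destruct (Bool.bool_dec (wfirst w) l) as [Fl|Fl]; destruct (Bool.bool_dec (wlast w) l) as [Ll|Ll];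
    try apply neq_negb in Fl; try apply neq_negb in Ll.
  - apply moved_subcone_same; assumption.
  - destruct (wprod_inv_reduced w h R N Hh) as [w' [R' [N' [F' [L' E]]]]].
    rewrite <- (invgK (wprod w * h)), E. apply has_moved_subcone_inv.
    apply moved_subcone_mixed_word; [assumption|assumption|apply memH1|congruence|congruence].
  - apply moved_subcone_mixed_word; assumption.
  - apply moved_subcone_apart; assumption.
Qed.
(** * The subgroups [K_j] *)

Lemma Tword_reduced j k g : Tword G G0 G1 j k g ->
  exists w, reduced w /\ length w = k /\ (w = [] \/ wfirst w = j) /\ wprod w = g.
Proof.
  revert j g; induction k as [|k IH]; intros j g T.
  - simpl in T. subst g. exists []. simpl. auto.
  - simpl in T. destruct T as [x [y [Gx [Nx [Ty Eg]]]]].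
    destruct (IH _ _ Ty) as [w [R [L [F Pw]]]].
    exists ((j,x)::w). split; [|split; [simpl; congruence|split; [right; reflexivity|simpl; congruence]]].
    simpl. split; [auto|]. split; [auto|]. split; [auto|].
    destruct w as [|[k' x'] w]; auto. destruct F as [F|F]; [discriminate|]. exact F.
Qed.

Lemma reduced_Tword w j : reduced w -> (w = [] \/ wfirst w = j) -> Tword G G0 G1 j (length w) (wprod w).
Proof.
  revert j; induction w as [|[k x] w IH]; intros j R F; simpl; auto.
  destruct F as [F|F]; [discriminate|]. simpl in F. unfold wfirst in F. simpl in F. subst k.
  simpl in R. destruct R as [A [B [C D]]].
  exists x, (wprod w). split; [auto|]. split; [auto|]. split; [|reflexivity].
  apply IH; auto. destruct w as [|[k' x'] w]; [left; reflexivity|right; exact D].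
Qed.

Lemma Kset_conj_cone0 l x a : Kset G G0 G1 l x -> cone0 l a -> H (ginv a * x * a).
Proof.
  intros K [Ha|[w [R [N [F Hw]]]]].
  - exact (K 0 a Ha).
  - set (h := ginv (wprod w) * a) in Hw.
    assert (Ea : a = wprod w * h) by (unfold h; gsimpl).
    assert (T : Tset G G0 G1 l (length w) (wprod w)).
    { destruct w as [|p w]; [congruence|]. simpl. apply (reduced_Tword (p::w) l R (or_intror F)). }
    pose proof (K _ _ T) as Hk.
    replace (ginv a * x * a) with (ginv h * (ginv (wprod w) * x * wprod w) * h) by (rewrite Ea; gsimpl).
    apply memHM; [apply memHM; [apply memHV|]|]; auto.
Qed.

Lemma conj_cone0_Kset l x : (forall a, cone0 l a -> H (ginv a * x * a)) -> Kset G G0 G1 l x.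
Proof.
  intros A k g T. destruct k as [|k].
  - apply A. left. exact T.
  - apply A. right. destruct (Tword_reduced _ _ _ T) as [w [R [L [F Pw]]]].
    destruct w as [|p w]; [discriminate|]. destruct F as [F|F]; [discriminate|].
    subst g. rewrite <- F. apply begins_wprod; auto. discriminate.
Qed.

Definition K_trivial := forall j x, Kset G G0 G1 j x -> x = e.

Lemma notK_witness l x : ~ Kset G G0 G1 l x -> exists a, cone0 l a /\ ~ H (ginv a * x * a).
Proof.
  intro NK. apply NNPP. intro NE. apply NK, conj_cone0_Kset. intros a Ca.
  apply NNPP. intro Na. apply NE. exists a. auto.
Qed.

Lemma cone_mulE d c l a : cone (d * c) l (d * a) <-> cone c l a.
Proof. unfold cone. replace (ginv (d * c) * (d * a)) with (ginv c * a) by gsimpl. tauto. Qed.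

Lemma moves_off_conj d g c l : moves_off g c l -> moves_off (d * g * ginv d) (d * c) l.
Proof.
  intros M b Cb Cgb. apply (M (ginv d * b)).
  - apply (proj1 (cone_mulE d _ _ _)). gsimpl. exact Cb.
  - apply (proj1 (cone_mulE d _ _ _)). replace (d * (g * (ginv d * b))) with (d * g * ginv d * b)
      by gsimpl. exact Cgb.
Qed.

Lemma cone0_subcone l a : cone0 l a -> exists l2, forall b, cone a l2 b -> cone0 l b.
Proof.
  intros [Ha|[w [R [N [F Hw]]]]].
  - exists l. intros b Cb. replace b with (a * (ginv a * b)) by gsimpl. apply cone0_mulHl; auto.
  - exists (negb (wlast w)). intros b Cb. right. rewrite <- F.
    replace b with (wprod w * ((ginv (wprod w) * a) * (ginv a * b))) by gsimpl.
    apply begins_cat; auto. apply cone0_mulHl; auto.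
Qed.

(* A nontrivial [c^-1 f c] is not in [K_l], so some [a] in the half-tree [H u C_l] conjugates it
   out of [H]; a subcone at [a] moved off by that conjugate, translated by [c a], does the job. *)
Lemma moves_off_refine c l f : K_trivial -> f <> e ->
  exists c' l', (forall b, cone c' l' b -> cone c l b) /\ moves_off f c' l'.
Proof.
  intros KS Nf.
  assert (NK : ~ Kset G G0 G1 l (ginv c * f * c)).
  { intro K. apply Nf. replace f with (c * (ginv c * f * c) * ginv c) by gsimpl.
    rewrite (KS l _ K). gsimpl. }
  destruct (notK_witness l _ NK) as [a [Ca Na]].
  destruct (cone0_subcone l a Ca) as [l2 Sub].
  destruct (moved_subcone _ l2 Na) as [c' [l' [Inc Mv]]].
  exists (c * a * c'), l'. split.
  - intros b Cb.
    assert (C1 : cone (a * c') l' (ginv c * b)).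
    { apply (proj1 (cone_mulE c _ _ _)). rewrite mulKVg, gmulA. exact Cb. }
    assert (C2 : cone c' l' (ginv a * (ginv c * b))).
    { apply (proj1 (cone_mulE a _ _ _)). rewrite mulKVg. exact C1. }
    exact (Sub _ (Inc _ C2)).
  - pose proof (moves_off_conj (c * a) _ _ _ Mv) as M.
    replace (c * a * (ginv a * (ginv c * f * c) * a) * ginv (c * a)) with f in M by gsimpl. exact M.
Qed.

Lemma moves_off_common F : K_trivial -> (forall f, In f F -> f <> e) ->
  exists c l, forall f, In f F -> moves_off f c l.
Proof.
  intro KS. induction F as [|f F IH]; intros NF0.
  - exists e, true. intros f [].
  - destruct IH as [c [l M]]. { intros f' I. apply NF0. right; auto. }
    destruct (moves_off_refine c l f KS (NF0 f (or_introl eq_refl))) as [c' [l' [Inc Mf]]].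
    exists c', l'. intros f2 [E|I].
    + subst f2. exact Mf.
    + intros b Cb Cfb. apply (M f2 I b (Inc _ Cb) (Inc _ Cfb)).
Qed.
(** * Rays and the boundary *)

Local Notation V := (vertex G).
Local Notation veq := (veq G G0 G1).
Local Notation adj := (adj G G0 G1).
Local Notation is_ray := (is_ray G G0 G1).
Local Notation cofinal := (cofinal G G0 G1).
Local Notation Zset := (Zset G G0 G1).
Local Notation vact := (vact G).
Local Notation ray_act := (ray_act G).

Lemma veq_refl v : veq v v.
Proof. split; [reflexivity|]. gsimpl. apply memG1. Qed.
Lemma veq_sym v w : veq v w -> veq w v.
Proof.
  intros [E A]. split; [auto|]. rewrite <- E.
  replace (ginv (snd w) * snd v) with (ginv (ginv (snd v) * snd w)) by gsimpl. apply memGV; auto.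
Qed.
Lemma veq_trans u v w : veq u v -> veq v w -> veq u w.
Proof.
  intros [E1 A1] [E2 A2]. split; [congruence|].
  replace (ginv (snd u) * snd w) with ((ginv (snd u) * snd v) * (ginv (snd v) * snd w)) by gsimpl.
  apply memGM; auto. rewrite E1; auto.
Qed.
Lemma veq_act g v w : veq v w -> veq (vact g v) (vact g w).
Proof.
  intros [E A]. split; [exact E|]. simpl.
  replace (ginv (g * snd v) * (g * snd w)) with (ginv (snd v) * snd w) by gsimpl. exact A.
Qed.
Lemma adj_veq v w v' w' : adj v w -> veq v v' -> veq w w' -> adj v' w'.
Proof.
  intros [Ne [g [A B]]] Vv Ww. destruct Vv as [Ev Gv]. destruct Ww as [Ew Gw].
  split; [congruence|]. exists g. split.
  - rewrite <- Ev. apply veq_trans with v; [apply veq_sym; split; auto|exact A].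
  - rewrite <- Ew. apply veq_trans with w; [apply veq_sym; split; auto|exact B].
Qed.
Lemma vact_comp a b v : vact a (vact b v) = vact (a * b) v.
Proof. unfold Defs.vact. simpl. rewrite gmulA. reflexivity. Qed.
Lemma ray_act_comp a b x : ray_act a (ray_act b x) = ray_act (a * b) x.
Proof. apply functional_extensionality. intro n. unfold Defs.ray_act. apply vact_comp. Qed.
Lemma ray_act_e x : ray_act e x = x.
Proof.
  apply functional_extensionality. intro n. unfold Defs.ray_act, Defs.vact. rewrite gmul1.
  destruct (x n); reflexivity.
Qed.

Lemma ray_act_ray g x : is_ray x -> is_ray (ray_act g x).
Proof.
  intros R n. destruct (R n) as [[Ne [c [A B]]] Nback]. unfold Defs.ray_act. split.
  - split; [exact Ne|]. exists (g * c). split.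
    + apply (veq_act g) in A. exact A.
    + apply (veq_act g) in B. exact B.
  - intro Habs. apply Nback. destruct Habs as [E A2]. split; [exact E|]. simpl in A2.
    replace (ginv (snd (x (S (S n)))) * snd (x n)) with (ginv (g * snd (x (S (S n)))) * (g * snd (x n)))
      by gsimpl. exact A2.
Qed.

Lemma cof_refl x : cofinal x x.
Proof. exists 0, 0. intro; apply veq_refl. Qed.
Lemma cof_sym x y : cofinal x y -> cofinal y x.
Proof. intros [m [k C]]. exists k, m. intro n. apply veq_sym, C. Qed.
Lemma cof_trans x y z : cofinal x y -> cofinal y z -> cofinal x z.
Proof.
  intros [m [k C]] [m' [k' C']]. exists (m + m'), (k + k'). intro n.
  apply veq_trans with (y (n + m' + k)).
  - replace (n + (m + m')) with ((n + m') + m) by lia. apply C.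
  - replace (n + m' + k) with ((n + k) + m') by lia. replace (n + (k + k')) with ((n + k) + k') by lia. apply C'.
Qed.
Lemma cof_act g x y : cofinal x y -> cofinal (ray_act g x) (ray_act g y).
Proof. intros [m [k C]]. exists m, k. intro n. unfold Defs.ray_act. apply veq_act, C. Qed.

Lemma Zset_act g j c x : Zset j c x -> Zset j (g * c) (ray_act g x).
Proof.
  intros [y [Ry [Cy [n [A B]]]]]. exists (ray_act g y).
  split; [apply ray_act_ray; auto|]. split; [apply cof_act; auto|].
  exists n. unfold Defs.ray_act. split.
  - apply (veq_act g) in A. exact A.
  - apply (veq_act g) in B. exact B.
Qed.
Lemma Zset_cof j c x x' : Zset j c x -> cofinal x' x -> Zset j c x'.
Proof. intros [y [Ry [Cy P0]]] C. exists y. split; auto. split; auto. apply cof_trans with x; auto. Qed.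
Lemma Zset_coset j c c' x : H (ginv c * c') -> Zset j c x -> Zset j c' x.
Proof.
  intros Hc [y [Ry [Cy [n [A B]]]]]. exists y. split; auto. split; auto. exists n. split.
  - apply veq_trans with (j, c); auto. split; [reflexivity|]. apply memH_Gj; auto.
  - apply veq_trans with (negb j, c); auto. split; [reflexivity|]. apply memH_Gj; auto.
Qed.
Lemma Zset_self x n j c : is_ray x -> veq (x n) (j, c) -> veq (x (S n)) (negb j, c) -> Zset j c x.
Proof. intros R A B. exists x. split; auto. split; [apply cof_refl|]. exists n; auto. Qed.

Lemma ray_edge x n : is_ray x -> exists j c, veq (x n) (j, c) /\ veq (x (S n)) (negb j, c).
Proof.
  intro R. destruct (R n) as [[Ne [c [A B]]] _]. exists (fst (x n)), c. split; auto.
  replace (negb (fst (x n))) with (fst (x (S n))); auto.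
  destruct (fst (x n)), (fst (x (S n))); simpl in *; congruence.
Qed.

Definition prepend (v : V) (u : nat -> V) (p : nat) : nat -> V :=
  fun i => match i with 0 => v | S i' => u (p + i') end.
Lemma prepend_ray v u p : is_ray u -> adj v (u p) -> ~ veq (u (S p)) v -> is_ray (prepend v u p).
Proof.
  intros R A N n. destruct n as [|n]; simpl.
  - split; [rewrite Nat.add_0_r; exact A|]. rewrite Nat.add_1_r. exact N.
  - destruct (R (p + n)) as [A' N']. split.
    + rewrite Nat.add_succ_r. exact A'.
    + rewrite !Nat.add_succ_r. exact N'.
Qed.
Lemma prepend_cof v u p : cofinal u (prepend v u p).
Proof. exists p, 1. intro n. rewrite Nat.add_1_r. simpl. rewrite Nat.add_comm. apply veq_refl. Qed.

Definition splice (y : nat -> V) (q : nat) (w : nat -> V) (r : nat) : nat -> V :=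
  fun i => if i <=? q then y i else w (r + (i - q)).

Lemma splice_ray y q w r : is_ray y -> is_ray w -> 1 <= q -> veq (y q) (w r) ->
  veq (y (S q)) (w (S r)) -> is_ray (splice y q w r).
Proof.
  intros Ry Rw Hq Eq1 Eq2 n. unfold splice.
  destruct (Nat.leb_spec (S (S n)) q) as [L2|L2].
  - rewrite (proj2 (Nat.leb_le n q)) by lia. rewrite (proj2 (Nat.leb_le (S n) q)) by lia.
    apply Ry.
  - destruct (Nat.eq_dec (S n) q) as [E|E].
    + subst q. rewrite (proj2 (Nat.leb_le n (S n))) by lia. rewrite (proj2 (Nat.leb_le (S n) (S n))) by lia.
      replace (r + (S (S n) - S n)) with (S r) by lia.
      destruct (Ry n) as [A N]. split; [exact A|]. intro Habs. apply N.
      apply veq_trans with (w (S r)); auto. 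
    + destruct (Nat.eq_dec n q) as [E2|E2].
      * subst q. rewrite (proj2 (Nat.leb_le n n)) by lia.
        rewrite (proj2 (Nat.leb_nle (S n) n)) by lia.
        replace (r + (S n - n)) with (S r) by lia. replace (r + (S (S n) - n)) with (S (S r)) by lia.
        destruct (Rw r) as [A N]. split.
        -- apply adj_veq with (w r) (w (S r)); auto. apply veq_sym; auto. apply veq_refl.
        -- intro Habs. apply N. apply veq_trans with (y n); auto.
      * rewrite (proj2 (Nat.leb_nle n q)) by lia.
        rewrite (proj2 (Nat.leb_nle (S n) q)) by lia.
        replace (r + (S n - q)) with (S (r + (n - q))) by lia.
        replace (r + (S (S n) - q)) with (S (S (r + (n - q)))) by lia.
        apply Rw.
Qed.

Lemma splice_cof y q w r : cofinal w (splice y q w r).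
Proof.
  exists (S r), (S q). intro n. unfold splice. rewrite (proj2 (Nat.leb_nle (n + S q) q)) by lia.
  replace (r + (n + S q - q)) with (n + S r) by lia. apply veq_refl.
Qed.

(* A ray through a late edge of [x] can be spliced onto the witness of [x] in [Z(j, c)]. *)
Lemma Zset_tail x j c : is_ray x -> Zset j c x -> exists N, forall n, N <= n -> forall j' c',
  veq (x n) (j', c') -> veq (x (S n)) (negb j', c') -> forall z, Zset j' c' z -> Zset j c z.
Proof.
  intros Rx [y [Ry [[m [k Cxy]] [p [Ap Bp]]]]]. exists (m + S p). intros n Hn j' c' A B z [w [Rw [Czw [r [Ar Br]]]]].
  set (q := n - m + k).
  assert (Xq : veq (x n) (y q)) by (unfold q; replace n with ((n - m) + m) at 1 by lia; apply Cxy).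
  assert (XSq : veq (x (S n)) (y (S q))) by (unfold q; replace (S n) with ((S n - m) + m) at 1 by lia;
     replace (S (n - m + k)) with ((S n - m) + k) by lia; apply Cxy).
  assert (Yq : veq (y q) (w r))
    by (apply veq_trans with (j', c'); [apply veq_trans with (x n); [apply veq_sym|]|apply veq_sym]; auto).
  assert (YSq : veq (y (S q)) (w (S r))) by (apply veq_trans with (negb j', c');
    [apply veq_trans with (x (S n)); [apply veq_sym|]|apply veq_sym]; auto).
  exists (splice y q w r). split; [apply splice_ray; auto; unfold q; lia|].
  split; [apply cof_trans with w; auto; apply splice_cof|].
  exists p. unfold splice. rewrite (proj2 (Nat.leb_le p q)) by (unfold q; lia).
  rewrite (proj2 (Nat.leb_le (S p) q)) by (unfold q; lia). auto.
Qed.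

Lemma gen_open_Zset U : gen_open G G0 G1 U -> forall x, is_ray x -> U x ->
  exists j c, Zset j c x /\ forall z, Zset j c z -> U z.
Proof.
  induction 1 as [j g| |U V' GU IU GV IV|S GS IS]; intros x Rx Ux.
  - exists j, g. split; auto.
  - destruct (ray_edge x 0 Rx) as [j [c [A B]]]. exists j, c. split; [eapply Zset_self; eauto|]. auto.
  - destruct Ux as [Ux Vx]. destruct (IU x Rx Ux) as [j1 [c1 [Z1 S1]]]. destruct (IV x Rx Vx) as [j2 [c2 [Z2 S2]]].
    destruct (Zset_tail x j1 c1 Rx Z1) as [N1 T1]. destruct (Zset_tail x j2 c2 Rx Z2) as [N2 T2].
    destruct (ray_edge x (N1 + N2) Rx) as [j [c [A B]]]. exists j, c. split; [eapply Zset_self; eauto|].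
    intros z Zz. split.
    + apply S1. apply (T1 (N1 + N2) ltac:(lia) j c A B z Zz).
    + apply S2. apply (T2 (N1 + N2) ltac:(lia) j c A B z Zz).
  - destruct Ux as [U [SU Ux]]. destruct (IS U SU x Rx Ux) as [j [c [Z Sz]]]. exists j, c. split; auto.
    intros z Zz. exists U. auto.
Qed.

Lemma veq_Gj k y : Gj k y -> veq (k, y) (k, e).
Proof. intro Gy. split; [reflexivity|]. simpl. rewrite mulg1. apply memGV; auto. Qed.

Lemma Zset_prepend_base k u p : is_ray u -> veq (u p) (k, e) -> ~ veq (u (S p)) (negb k, e) ->
  Zset (negb k) e u.
Proof.
  intros Ru A N. exists (prepend (negb k, e) u p). split.
  - apply prepend_ray; auto. apply adj_veq with (negb k, e) (k, e); [|apply veq_refl|apply veq_sym; auto].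
    split; [destruct k; discriminate|]. exists e. split; apply veq_refl.
  - split; [apply prepend_cof|]. exists 0. simpl. split; [apply veq_refl|].
    rewrite Nat.add_0_r, negb_involutive. exact A.
Qed.

(* The edges [yH] and [H] share the vertex [G_k], so a ray through [yH] also passes through [H]
   after possibly prepending that vertex. *)
Lemma Zset_neighbor k y z : Gj k y -> Zset (negb k) y z \/ Zset k y z -> Zset false e z \/ Zset true e z.
Proof.
  intros Gy Zs.
  assert (Goal : forall s, Zset s e z -> Zset false e z \/ Zset true e z) by (intros [] Z; auto).
  destruct (classic (H y)) as [Hy|Ny].
  - destruct Zs as [Z|Z]; eapply Goal; eapply Zset_coset; eauto; gsimpl; apply memHV; auto.
  - destruct Zs as [[u [Ru [Cu [p [Ap Bp]]]]]|[u [Ru [Cu [p [Ap Bp]]]]]].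
    + rewrite negb_involutive in Bp.
      assert (B' : veq (u (S p)) (k, e)) by (apply veq_trans with (k, y); auto; apply veq_Gj; auto).
      destruct (classic (veq (u (S (S p))) (negb k, e))) as [Vq|Vq].
      * apply (Goal k), (Zset_cof _ _ u); [apply (Zset_self u (S p)); auto|exact Cu].
      * apply (Goal (negb k)), (Zset_cof _ _ u); [apply (Zset_prepend_base k u (S p)); auto|exact Cu].
    + apply (Goal (negb k)), (Zset_cof _ _ u); [|exact Cu].
      apply (Zset_prepend_base k u p); auto.
      * apply veq_trans with (k, y); auto. apply veq_Gj; auto.
      * intro Habs. apply Ny. apply (memH_both k); auto. apply memGVr.
        assert (X2 : veq (negb k, y) (negb k, e)) by (apply veq_trans with (u (S p)); auto; apply veq_sym; auto).
        destruct X2 as [_ X2]. simpl in X2. rewrite mulg1 in X2. exact X2.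
Qed.
Lemma Zset_wprod_base w h s z : reduced w -> H h -> is_ray z -> Zset s (wprod w * h) z ->
  Zset false e z \/ Zset true e z.
Proof.
  revert s z. induction w as [|[k y] w IH]; intros s z R Hh Rz Z.
  - simpl in Z. rewrite gmul1 in Z. apply Zset_coset with (c' := e) in Z; [destruct s; auto|].
    gsimpl. apply memHV; auto.
  - destruct R as [Gy [_ [R _]]].
    assert (Z' : Zset s (wprod w * h) (ray_act (ginv y) z)).
    { apply Zset_act with (g := ginv y) in Z. simpl wprod in Z.
      replace (ginv y * (y * wprod w * h)) with (wprod w * h) in Z by gsimpl. exact Z. }
    destruct (IH s _ R Hh (ray_act_ray _ _ Rz) Z') as [Z2|Z2];
      apply Zset_act with (g := y) in Z2; rewrite ray_act_comp, mulg1, mulgV, ray_act_e in Z2;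
      apply (Zset_neighbor k y z Gy); destruct k; auto.
Qed.

Lemma ray_Zset_base z : is_ray z -> Zset false e z \/ Zset true e z.
Proof.
  intro Rz. destruct (ray_edge z 0 Rz) as [j [c [A B]]]. pose proof (Zset_self z 0 j c Rz A B) as Z.
  destruct (classic (H c)) as [Hc|Nc].
  - apply (Zset_wprod_base [] c j z I Hc Rz). simpl. rewrite gmul1. exact Z.
  - destruct (notH_wprod c Nc) as [w [h [R [_ [Hh ->]]]]]. exact (Zset_wprod_base w h j z R Hh Rz Z).
Qed.




Lemma veq_edge s a a' b b' : veq (s, a) (s, b) -> veq (negb s, a') (negb s, b') ->
  Gj (negb s) (ginv a * a') -> Gj (negb s) (ginv b * b') -> H (ginv a * b).
Proof.
  intros [_ Eab] [_ Eab'] Ga Gb. simpl in Eab, Eab'. apply (memH_both s); [exact Eab|].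
  replace (ginv a * b) with ((ginv a * a') * (ginv a' * b') * ginv (ginv b * b')) by gsimpl.
  apply memGM; [apply memGM|apply memGV]; assumption.
Qed.

Fixpoint alt_side (l : bool) (n : nat) : bool :=
  match n with 0 => negb l | S n => negb (alt_side l n) end.

Section AlternatingRay.
Variables (A : bool -> G) (c : G) (l : bool).
Hypothesis HA : forall s, Gj s (A s) /\ ~ H (A s).

Fixpoint alt_elt (n : nat) : G :=
  match n with 0 => c | S n => alt_elt n * A (alt_side l (S n)) end.

Definition alt_ray (n : nat) : vertex G := (alt_side l n, alt_elt n).

Lemma alt_ray_is_ray : is_ray alt_ray.
Proof.
  intro n. unfold alt_ray. simpl. split.
  - split; [destruct (alt_side l n); discriminate|]. exists (alt_elt n). split; [apply veq_refl|].
    split; [reflexivity|]. simpl. gsimpl. apply memGV, (HA _).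
  - intros [_ G2]. simpl in G2. rewrite negb_involutive in G2.
    destruct (HA (negb (alt_side l n))) as [Gb Nb]. destruct (HA (alt_side l n)) as [Gc Nc].
    apply Nb. apply (memH_both (negb (alt_side l n))); [exact Gb|]. rewrite negb_involutive.
    replace (ginv (alt_elt n * A (negb (alt_side l n)) * A (alt_side l n)) * alt_elt n)
      with (ginv (A (alt_side l n)) * ginv (A (negb (alt_side l n)))) in G2 by gsimpl.
    apply memGVr, (memGMl (alt_side l n) (ginv (A (alt_side l n)))); [apply memGV|]; assumption.
Qed.

Lemma alt_elt_wprod n : n = 0 \/ exists w, reduced w /\ w <> [] /\ wfirst w = l /\
  wlast w = alt_side l n /\ ginv c * alt_elt n = wprod w.
Proof.
  induction n as [|n IH]; [left; reflexivity|]. right. destruct IH as [->|[w [R [N [F [L Pw]]]]]].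
  - exists [(l, A l)]. simpl. rewrite negb_involutive. destruct (HA l) as [G2 N2].
    split; [auto|]. split; [discriminate|]. split; [reflexivity|]. split; [reflexivity|]. gsimpl.
  - exists (w ++ [(alt_side l (S n), A (alt_side l (S n)))]). destruct (HA (alt_side l (S n))) as [G2 N2].
    split; [apply reduced_rcons; auto; right; rewrite L; reflexivity|].
    split; [destruct w; discriminate|]. split; [rewrite wfirst_rcons; auto|]. split; [apply wlast_rcons|].
    rewrite wprod_cat. simpl. rewrite <- Pw. gsimpl.
Qed.

Lemma alt_elt_cone n : cone c l (alt_elt n).
Proof.
  unfold cone. destruct (alt_elt_wprod n) as [->|[w [R [N [F [L Pw]]]]]].
  - left. simpl. gsimpl. apply memH1.
  - right. rewrite Pw, <- F. apply begins_wprod; assumption.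
Qed.

End AlternatingRay.

Lemma cone_ray c l : exists x : nat -> vertex G, is_ray x /\ x 0 = (negb l, c) /\
  (forall n, cone c l (snd (x n))) /\ (forall n, fst (x (S n)) = negb (fst (x n))) /\
  (forall n, Gj (fst (x (S n))) (ginv (snd (x n)) * snd (x (S n)))).
Proof.
  destruct (index2_witness false) as [a0 [Ga0 Na0]]. destruct (index2_witness true) as [a1 [Ga1 Na1]].
  set (A := fun b : bool => if b then a1 else a0).
  assert (HA : forall b, Gj b (A b) /\ ~ H (A b)) by (intros []; simpl; auto).
  exists (alt_ray A c l). split; [apply alt_ray_is_ray, HA|]. split; [reflexivity|].
  split; [intro n; apply alt_elt_cone, HA|]. split; [reflexivity|].
  intro n. simpl. gsimpl. apply (HA _).
Qed.

(* [edge_beyond j s a]: the edge [aH], oriented away from [a G_s], lies beyond the edge [H]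
   oriented from [G_{1-j}] to [G_j]. *)
Definition edge_beyond (j s : bool) (a : G) : Prop :=
  (s = negb j /\ H a) \/
  exists w h, reduced w /\ w <> [] /\ wfirst w = j /\ wlast w = s /\ H h /\ a = wprod w * h.

Lemma edge_beyond_cone0 j s a : edge_beyond j s a -> cone0 j a.
Proof.
  intros [[_ Ha]|[w [h [R [N [F [_ [Hh ->]]]]]]]]; [left; exact Ha|right].
  exists w. split; [|split; [|split]]; auto. gsimpl. exact Hh.
Qed.

Lemma edge_beyond_step j s a g : edge_beyond j s a -> Gj (negb s) (ginv a * g) -> ~ H (ginv a * g) ->
  edge_beyond j (negb s) g.
Proof.
  intros W Gz Nz. right. destruct W as [[-> Ha]|[w [h [R [N [F [L [Hh Ea]]]]]]]].
  - rewrite negb_involutive in *. exists [(j, g)], e.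
    assert (Gg : Gj j g) by (replace g with (a * (ginv a * g)) by gsimpl; apply memGM; auto; apply memH_Gj; auto).
    assert (Ng : ~ H g) by (intro Habs; apply Nz; apply memHM; auto; apply memHV; auto).
    split; [simpl; auto|]. split; [discriminate|]. split; [reflexivity|]. split; [reflexivity|].
    split; [apply memH1|]. simpl. gsimpl.
  - exists (w ++ [(negb s, h * (ginv a * g))]), e.
    assert (Ghz : Gj (negb s) (h * (ginv a * g))) by (apply memGM; auto; apply memH_Gj; auto).
    assert (Nhz : ~ H (h * (ginv a * g))) by (intro Habs; apply Nz; apply (memHMl h); auto).
    split; [apply reduced_rcons; auto; right; rewrite L; reflexivity|].
    split; [destruct w; discriminate|]. split; [rewrite wfirst_rcons; auto|]. split; [apply wlast_rcons|].
    split; [apply memH1|]. rewrite wprod_cat. simpl. rewrite Ea. gsimpl.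
Qed.

Lemma ray_edge_beyond j u n : is_ray u -> veq (u n) (negb j, e) -> veq (u (S n)) (j, e) ->
  forall i, exists a s, veq (u (n + i)) (s, a) /\ veq (u (S (n + i))) (negb s, a) /\ edge_beyond j s a.
Proof.
  intros Ru A0 B0. induction i as [|i IH].
  - exists e, (negb j). rewrite Nat.add_0_r, negb_involutive. split; [auto|]. split; [auto|].
    left. split; [reflexivity|apply memH1].
  - destruct IH as [a [s [Va [Vb W]]]].
    destruct (Ru (S (n + i))) as [[Ne [g [Ag Bg]]] _]. destruct (Ru (n + i)) as [_ Nback].
    assert (F1 : fst (u (S (n + i))) = negb s) by (destruct Vb; auto).
    assert (F2 : fst (u (S (S (n + i)))) = s)
      by (rewrite F1 in Ne; destruct (fst (u (S (S (n + i))))), s; simpl in *; congruence).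
    rewrite F1 in Ag. rewrite F2 in Bg.
    assert (Gz : Gj (negb s) (ginv a * g)) by (destruct (veq_trans _ _ _ (veq_sym _ _ Vb) Ag) as [_ Z]; exact Z).
    assert (Nz : ~ H (ginv a * g)).
    { intro Hz. apply Nback. apply veq_trans with (s, g); auto. apply veq_trans with (s, a); [|apply veq_sym; auto].
      split; [reflexivity|]. simpl. replace (ginv g * a) with (ginv (ginv a * g)) by gsimpl.
      apply memH_Gj, memHV; auto. }
    exists g, (negb s). rewrite Nat.add_succ_r, negb_involutive. split; [auto|]. split; [auto|].
    apply (edge_beyond_step _ _ a); assumption.
Qed.

Lemma vact_fix_vertex v t a k : veq v (t, a) -> H (ginv a * k * a) -> veq (vact k v) v.
Proof.
  intros [E A] Hk. split; [reflexivity|]. simpl. simpl in E. rewrite E in *.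
  replace (ginv (k * snd v) * snd v)
    with ((ginv (snd v) * a) * ginv (ginv a * k * a) * ginv (ginv (snd v) * a)) by gsimpl.
  apply memGM; [apply memGM|]; auto. apply memH_Gj, memHV; auto. apply memGV; auto.
Qed.

Lemma Kset_fixes_Zset j k u n : Kset G G0 G1 j k -> is_ray u -> veq (u n) (negb j, e) -> veq (u (S n)) (j, e) ->
  cofinal (ray_act k u) u.
Proof.
  intros Kk Ru A0 B0. exists (S n), (S n). intro i.
  destruct (ray_edge_beyond j u n Ru A0 B0 i) as [a [s [Va [Vb W]]]].
  replace (i + S n) with (S (n + i)) by lia. unfold Defs.ray_act.
  apply (vact_fix_vertex _ (negb s) a); [exact Vb|]. apply (Kset_conj_cone0 j); [exact Kk|].
  apply (edge_beyond_cone0 j s), W.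
Qed.

Lemma K_trivial_of_top_free : topologically_free G G0 G1 -> K_trivial.
Proof.
  intros TF j x Kx. apply NNPP. intro Nx. apply (TF x Nx).
  exists (Zset (negb j) e). split; [constructor|]. split.
  - destruct (cone_ray e j) as [y [Ry [Y0 [_ [Fy Gy]]]]]. exists y. split; auto.
    apply (Zset_self y 0); auto. { rewrite Y0. apply veq_refl. }
    pose proof (Gy 0) as T. rewrite Y0 in T. simpl in T. rewrite invg1, gmul1 in T.
    split. { rewrite Fy, Y0. reflexivity. } simpl. rewrite mulg1. apply memGV. exact T.
  - intros z Rz [u [Ru [Cu [n [A B]]]]]. rewrite negb_involutive in B.
    pose proof (Kset_fixes_Zset j x u n Kx Ru A B) as Fu.
    apply cof_trans with (ray_act x u); [apply cof_act; auto|]. apply cof_trans with u; auto. apply cof_sym; auto.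
Qed.

Lemma Zset_translate_opposite j b z : Gj (negb j) b -> ~ H b -> Zset (negb j) e z -> Zset j e (ray_act b z).
Proof.
  intros Gb Nb Z. apply (Zset_act b) in Z. rewrite mulg1 in Z.
  destruct Z as [u [Ru [Cu [p [Ap Bp]]]]]. rewrite negb_involutive in Bp.
  apply (Zset_cof _ _ u); [|exact Cu]. rewrite <- (negb_involutive j) at 1.
  apply (Zset_prepend_base (negb j) u p Ru).
  - apply veq_trans with (negb j, b); auto. apply veq_Gj; auto.
  - rewrite negb_involutive. intro Habs. apply Nb. apply (memH_both (negb j)); auto.
    rewrite negb_involutive. apply memGVr.
    assert (X2 : veq (j, b) (j, e)) by (apply veq_trans with (u (S p)); auto; apply veq_sym; auto).
    destruct X2 as [_ X2]. simpl in X2. rewrite mulg1 in X2. exact X2.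
Qed.

Definition ray_action_strongly_faithful :=
  strongly_faithful G (nat -> vertex G) is_ray cofinal ray_act.

Definition edge_action_strongly_faithful :=
  strongly_faithful G G (fun _ : G => True) (fun a b => H (ginv a * b)) (fun g a => g * a).

(* An open set fixed by [g] contains a basic set [c Z(j, e)]; the boundary is covered by
   [Z(j, e)] and [b^-1 Z(j, e)], so [c^-1 g c] and its conjugate by [b] fix every end. *)
Lemma top_free_of_ray_sf : ray_action_strongly_faithful -> topologically_free G G0 G1.
Proof.
  intros SF g Ng [U [GU [[x0 [R0 U0]] Fix]]].
  destruct (gen_open_Zset U GU x0 R0 U0) as [j [c [Z0 Sub]]].
  set (g' := ginv c * g * c).
  assert (FX : forall x, is_ray x -> Zset j e x -> cofinal (ray_act g' x) x).
  { intros x Rx Zx. apply (Zset_act c) in Zx. rewrite mulg1 in Zx.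
    pose proof (Fix _ (ray_act_ray c x Rx) (Sub _ Zx)) as Cf.
    apply (cof_act (ginv c)) in Cf. rewrite !ray_act_comp in Cf. rewrite gmulV, ray_act_e in Cf.
    unfold g'. exact Cf. }
  destruct (index2_witness (negb j)) as [b [Gb Nb]].
  destruct (SF [g'; ginv b * g' * b]) as [z [Rz Nz]].
  { intros f [<-|[<-|[]]]; apply conjg_neq1; [exact Ng|apply conjg_neq1, Ng]. }
  assert (Cz : Zset j e z \/ Zset (negb j) e z) by (destruct (ray_Zset_base z Rz); destruct j; simpl; auto).
  destruct Cz as [Zz|Zz].
  - apply (Nz g' (or_introl eq_refl)). apply FX; auto.
  - apply (Nz (ginv b * g' * b) (or_intror (or_introl eq_refl))).
    pose proof (FX _ (ray_act_ray b z Rz) (Zset_translate_opposite j b z Gb Nb Zz)) as Cf.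
    apply (cof_act (ginv b)) in Cf. rewrite !ray_act_comp in Cf. rewrite gmulV, ray_act_e in Cf. exact Cf.
Qed.

Lemma ray_sf_of_K_trivial : K_trivial -> ray_action_strongly_faithful.
Proof.
  intros KS F NF0. destruct (moves_off_common F KS NF0) as [c [l M]].
  destruct (cone_ray c l) as [x [Rx [_ [Cx [Fx Gx]]]]]. exists x. split; [exact Rx|].
  intros f If [m [k C]].
  destruct (C 0) as [E0 U0]. destruct (C 1) as [_ U1]. simpl in *.
  assert (Hu : H (ginv (f * snd (x m)) * snd (x k))).
  { apply (veq_edge (fst (x m)) _ (f * snd (x (S m))) _ (snd (x (S k)))).
    - split; [reflexivity|exact U0].
    - split; [reflexivity|]. simpl. rewrite <- Fx. exact U1.
    - rewrite <- Fx. replace (ginv (f * snd (x m)) * (f * snd (x (S m)))) with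
        (ginv (snd (x m)) * snd (x (S m))) by gsimpl. apply Gx.
    - rewrite E0, <- Fx. apply Gx. }
  apply (M f If (snd (x m)) (Cx m)). unfold cone.
  replace (ginv c * (f * snd (x m))) with ((ginv c * snd (x k)) * ginv (ginv (f * snd (x m)) * snd (x k)))
    by gsimpl.
  apply cone0_mulHr; [apply memHV; exact Hu|]. apply (Cx k).
Qed.

Lemma edge_sf_of_K_trivial : K_trivial -> edge_action_strongly_faithful.
Proof.
  intros KS F NF0. destruct (moves_off_common F KS NF0) as [c [l M]]. exists c. split; [exact I|].
  intros f If Hf. apply (M f If c (cone_self c l)). unfold cone. left.
  replace (ginv c * (f * c)) with (ginv (ginv (f * c) * c)) by gsimpl. apply memHV; auto.
Qed.

(* [x] in [K_j] fixes the half-tree [H u C_j] and its conjugate by [x0] in [G_j \ H] fixes the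
   complementary one. *)
Lemma K_trivial_of_edge_sf : edge_action_strongly_faithful -> K_trivial.
Proof.
  intros SF j x Kx. apply NNPP. intro Nx.
  destruct (index2_witness j) as [x0 [Gx0 Nx0]].
  destruct (SF [x; ginv x0 * x * x0]) as [a [_ Ha]].
  { intros f [<-|[<-|[]]]; [exact Nx|apply conjg_neq1, Nx]. }
  destruct (cone0_or_begins j a) as [Ca|Pa].
  - apply (Ha x (or_introl eq_refl)). replace (ginv (x * a) * a) with (ginv (ginv a * x * a)) by gsimpl.
    apply memHV. apply (Kset_conj_cone0 j); auto.
  - assert (C2 : cone0 j (x0 * a)).
    { right. replace (x0 * a) with (wprod [(j,x0)] * a) by (simpl; gsimpl).
      apply (begins_cat [(j, x0)]); [simpl; auto|discriminate|]. right. exact Pa. }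
    apply (Ha (ginv x0 * x * x0) (or_intror (or_introl eq_refl))).
    replace (ginv (ginv x0 * x * x0 * a) * a) with (ginv (ginv (x0 * a) * x * (x0 * a))) by gsimpl.
    apply memHV. apply (Kset_conj_cone0 j); auto.
Qed.

Lemma K_trivial_of_intG : (forall x, intG G G0 G1 x -> x = e) -> K_trivial.
Proof. intros I j x Kx. apply I. intros N _ HN. apply HN. destruct j; auto. Qed.

Lemma intG_trivial_of_K_trivial : K_trivial -> forall x, intG G G0 G1 x -> x = e.
Proof.
  intros KS x Ix. apply (Ix (fun z => z = e)).
  - split; [split; [reflexivity|split]|].
    + intros a b -> ->. gsimpl.
    + intros a ->. apply invg1.
    + intros g a ->. gsimpl.
  - intros y [K|K]; eapply KS; eauto.
Qed.

End Amalgam.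

Theorem proposition5p3 (G : Group) (G0 G1 : G -> Prop) :
  is_amalgam G0 G1 -> nondegenerate G G0 G1 ->
  let TFAE_i := forall x, intG G G0 G1 x -> x = gone in
  let TFAE_ii := strongly_faithful G G (fun _ : G => True)
                   (fun a b => Hsub G G0 G1 (gmul (ginv a) b)) (fun g a => gmul g a) in
  let TFAE_iii := strongly_faithful G (nat -> vertex G) (is_ray G G0 G1)
                   (cofinal G G0 G1) (ray_act G) in
  let TFAE_iv := topologically_free G G0 G1 in
  (TFAE_i <-> TFAE_ii) /\ (TFAE_ii <-> TFAE_iii) /\ (TFAE_iii <-> TFAE_iv).
Proof.
  intros Ham Hnd TFAE_i TFAE_ii TFAE_iii TFAE_iv.
  pose proof (K_trivial_of_intG G G0 G1). pose proof (intG_trivial_of_K_trivial G G0 G1).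
  pose proof (K_trivial_of_edge_sf G G0 G1 Ham Hnd). pose proof (edge_sf_of_K_trivial G G0 G1 Ham Hnd).
  pose proof (ray_sf_of_K_trivial G G0 G1 Ham Hnd). pose proof (top_free_of_ray_sf G G0 G1 Ham Hnd).
  pose proof (K_trivial_of_top_free G G0 G1 Ham Hnd).
  unfold TFAE_i, TFAE_ii, TFAE_iii, TFAE_iv; tauto.
Qed.
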